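(* Let $(\Gamma,f,\mu)$ be a measured Reeb graph, $\mathfrak{c}$ a balanced circulation function on $\Gamma$, and $\tilde V$ the set of exceptional points. Assume that for each exceptional point $x_i\in\tilde V$ there are a neighborhood $U_i$ of $x_i$ and a $1$-form $\beta_i$ on $U_i$ such that for each $x\in U_i\setminus\{x_i\}$, $\operatorname{sign}(\beta_i/df)(x)=-\operatorname{sign}\mathfrak{c}(x)$. Then there exists a $1$-form $\beta$ on $\Gamma$ which does not vanish on $\Gamma\setminus\tilde V$, coincides with $\beta_i$ in a neighborhood of each $x_i\in\tilde V$, and is such that the form $f\beta$ is exact.
   Context: Reeb graph: a finite connected oriented graph $\Gamma$ with continuous $f\colon\Gamma\to\mathbb{R}$ strictly increasing along edges; vertices are $1$-valent (of boundary or non-boundary type) or $3$-valent with two incoming and one outgoing edge or vice versa; at a $3$-valent vertex the trunk $e_0$ is the edge alone in its direction, the other two $e_1,e_2$ are branches. A log-smooth measure $\mu$: smooth non-vanishing density $d\mu/df$ at interior points and $1$-valent vertices; near each $3$-valent $v$, with $\tilde f=f-f(v)$, $\mu([v,x])=\varepsilon_i\psi(\tilde f(x))\ln|\tilde f(x)|+\eta_i(\tilde f(x))$ for $x\in e_i$ near $v$, where $\varepsilon_0=2,\varepsilon_1=\varepsilon_2=-1$ and $\psi,\eta_i$ are smooth near $0$ with $\psi(0)=0,\psi'(0)\neq0$, $\eta_0+\eta_1+\eta_2=0$. A measured Reeb graph is a Reeb graph with a log-smooth measure. With $V(\Gamma)$ the vertex set, a circulation function is a continuous $\mathfrak{c}\colon\Gamma\setminus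 V(\Gamma)\to\mathbb{R}$ with finite limits at vertices along each edge, such that $\mathfrak{c}(y)-\mathfrak{c}(x)=\int_{[x,y]}f\,d\mu$ for interior points $x,y$ of an edge pointing from $x$ to $y$, and at every non-boundary vertex the sum of limits along incoming edges equals the sum of limits along outgoing edges. It is balanced if at each $3$-valent vertex $v$ its limits $c_0(v),c_1(v),c_2(v)$ along the three adjacent edges are non-zero and of the same sign. The set of exceptional points is $\tilde V=V(\Gamma)\cup\{x\in\Gamma: f(x)=0\}\cup\{x\in\Gamma:\mathfrak{c}(x)=0\}$. A $1$-form on $\Gamma$ is an expression which locally can be written $g(f)\,df$ with $g$ a smooth function of $f$; $\beta/df$ denotes the corresponding function $g$. A $1$-form $\beta$ is exact if $\int_\ell\beta=0$ for every cycle $\ell$ in $\Gamma$. *)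

From Stdlib Require Import Reals.
From Coquelicot Require Import Coquelicot.
From mathcomp Require Import ssreflect ssrfun ssrbool eqtype ssrnat seq choice fintype fingraph.

Set Implicit Arguments.
Unset Strict Implicit.
Unset Printing Implicit Defensive.

Open Scope R_scope.

(** Points of the geometric realization of a Reeb graph:
    a vertex [PV v], or the interior point [PE e t] of edge [e] at which f = t
    (an edge is parametrized by the value of f, f being strictly increasing on it).
    [PE e t] is a genuine point only when f(src e) < t < f(tgt e) (see [onG]). *)
Inductive gpoint (V E : Type) : Type :=
  | PV of V
  | PE of E & R.
Arguments PV {V E}.
Arguments PE {V E}.

Definition sgn (x : R) : R :=
  if Rlt_dec 0 x then 1 else if Rlt_dec x 0 then -1 else 0.

Definition smooth_on (g : R -> R) (a d : R) : Prop :=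
  forall (n : nat) (y : R), Rabs (y - a) < d -> ex_derive_n g n y.

Definition sumE (E : finType) (P : pred E) (g : E -> R) : R :=
  foldr Rplus 0 (map g (filter P (enum E))).

Section Reeb.

Variables (V E : finType) (src tgt : E -> V) (fv : V -> R).

Definition indeg (v : V) : nat := #|[pred e : E | tgt e == v]|.
Definition outdeg (v : V) : nat := #|[pred e : E | src e == v]|.
Definition deg (v : V) : nat := (indeg v + outdeg v)%N.
Definition incident (v : V) (e : E) : bool := (src e == v) || (tgt e == v).

Definition adj : rel V := fun u w =>
  [exists e : E, ((src e == u) && (tgt e == w)) || ((src e == w) && (tgt e == u))].

Definition is_reeb_graph (bnd : pred V) : Prop :=
  (forall e, fv (src e) < fv (tgt e)) /\
  (forall u w, connect adj u w) /\
  (forall v, (deg v == 1)%N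
             || ((indeg v == 2)%N && (outdeg v == 1)%N)
             || ((indeg v == 1)%N && (outdeg v == 2)%N)) /\
  (forall v, bnd v -> deg v = 1%N).

Definition trunk (v : V) (e : E) : bool :=
  incident v e && (if src e == v then (outdeg v == 1)%N else (indeg v == 1)%N).

Definition eps (v : V) (e : E) : R := if trunk v e then 2 else -1.

Definition onG (x : gpoint V E) : Prop :=
  match x with
  | PV _ => True
  | PE e t => fv (src e) < t < fv (tgt e)
  end.

Definition fpt (x : gpoint V E) : R :=
  match x with PV v => fv v | PE _ t => t end.

Definition is_vertex (x : gpoint V E) : Prop :=
  match x with PV _ => True | PE _ _ => False end.

Definition inball (x : gpoint V E) (d : R) (y : gpoint V E) : Prop :=
  match x, y with
  | PV v, PV w => v = w
  | PV v, PE e s => incident v e /\ Rabs (s - fv v) < d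
  | PE e t, PE e' s => e = e' /\ Rabs (s - t) < d
  | PE _ _, PV _ => False
  end.

Definition nbhd (W : gpoint V E -> Prop) (x : gpoint V E) : Prop :=
  exists d, 0 < d /\ forall y, onG y -> inball x d y -> W y.

Definition openG (W : gpoint V E -> Prop) : Prop :=
  forall x, onG x -> W x -> nbhd W x.

(** A 1-form on W, represented by the function b = beta/df: near every point of
    W it is g(f) df with g a smooth function of f. *)
Definition oneform_on (W : gpoint V E -> Prop) (b : gpoint V E -> R) : Prop :=
  forall x, onG x -> W x ->
    exists d (g : R -> R), 0 < d /\ smooth_on g (fpt x) d /\
      forall y, onG y -> inball x d y -> W y -> b y = g (fpt y).

Definition bedge (b : gpoint V E -> R) (e : E) (t : R) : R :=
  if Rle_dec t (fv (src e)) then b (PV (src e))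
  else if Rle_dec (fv (tgt e)) t then b (PV (tgt e))
  else b (PE e t).

(** integral of the 1-form f*beta along the edge e (in its orientation) *)
Definition edge_int (b : gpoint V E -> R) (e : E) : R :=
  RInt (fun t => t * bedge b e t) (fv (src e)) (fv (tgt e)).

(** cycles: closed walks of oriented edges (true = traversed forward) *)
Definition step_start (s : E * bool) : V := if s.2 then src s.1 else tgt s.1.
Definition step_end (s : E * bool) : V := if s.2 then tgt s.1 else src s.1.

Fixpoint chain (s : E * bool) (l : seq (E * bool)) : Prop :=
  match l with
  | [::] => True
  | s' :: l' => step_end s = step_start s' /\ chain s' l'
  end.

Definition closed_walk (l : seq (E * bool)) : Prop :=
  match l with
  | [::] => False
  | s :: l' => chain s l' /\ step_end (last s l') = step_start s
  end.

Definition walk_int (b : gpoint V E -> R) (l : seq (E * bool)) : R :=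
  foldr Rplus 0 (map (fun s => if s.2 then edge_int b s.1 else - edge_int b s.1) l).

(** the 1-form f*beta (beta with beta/df = b) is exact *)
Definition exact_f_form (b : gpoint V E -> R) : Prop :=
  forall l, closed_walk l -> walk_int b l = 0.

(** ---- Log-smooth measure ----
    On each edge e the measure mu is described by its distribution function
    M e (as a function of f): mu of the part of e between f-values s < t is
    M e t - M e s; its density d mu / df is rho e. *)
Section Measure.
Variables (M rho : E -> R -> R).

Definition distribution_ok : Prop :=
  forall e,
    (forall t, fv (src e) < t < fv (tgt e) -> is_derive (M e) t (rho e t)) /\
    (forall t, fv (src e) <= t <= fv (tgt e) ->
       filterlim (M e) (within (fun s => fv (src e) <= s <= fv (tgt e)) (locally t))
                 (locally (M e t))).

Definition interior_density_ok : Prop :=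
  forall e t, fv (src e) < t < fv (tgt e) ->
    0 < rho e t /\ forall n : nat, ex_derive_n (rho e) n t.

Definition univalent_density_ok : Prop :=
  forall v e, (deg v == 1)%N -> incident v e ->
    exists d (g : R -> R), 0 < d /\ smooth_on g (fv v) d /\ g (fv v) <> 0 /\
      forall t, fv (src e) < t < fv (tgt e) -> Rabs (t - fv v) < d -> rho e t = g t.

(** mu([v, x]) for x on the edge e incident to v with f(x) = t *)
Definition mu_from (v : V) (e : E) (t : R) : R :=
  if src e == v then M e t - M e (fv v) else M e (fv v) - M e t.

Definition trivalent_log_ok : Prop :=
  forall v, (deg v == 3)%N ->
    exists d (psi : R -> R) (eta : E -> R -> R),
      0 < d /\ smooth_on psi 0 d /\ psi 0 = 0 /\ Derive psi 0 <> 0 /\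
      (forall e, incident v e -> smooth_on (eta e) 0 d) /\
      (forall s, Rabs s < d -> sumE (incident v) (fun e => eta e s) = 0) /\
      (forall e t, incident v e -> fv (src e) < t < fv (tgt e) -> Rabs (t - fv v) < d ->
         mu_from v e t
         = eps v e * psi (t - fv v) * ln (Rabs (t - fv v)) + eta e (t - fv v)).

Definition log_smooth : Prop :=
  distribution_ok /\ interior_density_ok /\ univalent_density_ok /\ trivalent_log_ok.

End Measure.

(** ---- Circulation functions ----
    c e t is the value of the circulation function at the interior point of e
    where f = t; cs e / ct e are its limits at the source / target of e. *)
Section Circulation.
Variables (rho : E -> R -> R) (bnd : pred V) (c : E -> R -> R).

Definition circ_limits (cs ct : E -> R) : Prop :=
  forall e,
    (forall t, fv (src e) < t < fv (tgt e) -> continuous (c e) t) /\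
    filterlim (c e) (at_right (fv (src e))) (locally (cs e)) /\
    filterlim (c e) (at_left (fv (tgt e))) (locally (ct e)) /\
    (forall x y, fv (src e) < x -> x < y -> y < fv (tgt e) ->
       c e y - c e x = RInt (fun t => t * rho e t) x y).

Definition kirchhoff (cs ct : E -> R) : Prop :=
  forall v, ~~ bnd v ->
    sumE (fun e => tgt e == v) ct = sumE (fun e => src e == v) cs.

Definition limit_at (cs ct : E -> R) (v : V) (e : E) : R :=
  if src e == v then cs e else ct e.

Definition balanced_at (cs ct : E -> R) : Prop :=
  forall v, (deg v == 3)%N ->
    (forall e, incident v e -> 0 < limit_at cs ct v e) \/
    (forall e, incident v e -> limit_at cs ct v e < 0).

Definition balanced_circulation : Prop :=
  exists cs ct, circ_limits cs ct /\ kirchhoff cs ct /\ balanced_at cs ct.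

Definition cval (x : gpoint V E) : R :=
  match x with PV _ => 0 | PE e t => c e t end.

Definition exceptional (x : gpoint V E) : Prop :=
  onG x /\ match x with PV _ => True | PE e t => t = 0 \/ c e t = 0 end.

End Circulation.

End Reeb.

From Stdlib Require Import Reals Lra Lia Psatz ClassicalEpsilon Classical.
From Coquelicot Require Import Coquelicot.
From mathcomp Require Import ssreflect ssrfun ssrbool eqtype ssrnat seq fintype fingraph path.
Set Implicit Arguments.
Unset Strict Implicit.
Unset Printing Implicit Defensive.
Open Scope R_scope.

(* On each edge, beta/df is glued from the prescribed local forms near the
   exceptional points of the edge (finitely many: c' = f rho with rho > 0 makes
   c monotone on each side of f = 0) and, away from them, from a
   locally constant "filling" -K sgn(c) with two free constants K-, K+ > 0 used
   where f sgn(c) is negative, resp. positive.  The integral of f beta over the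
   edge is then A + K- P - K+ N with P, N >= 0, so it can be given any prescribed
   value D, except that P = 0 forces D < A and N = 0 forces D > A.  Such
   constraints orient some edges; balancedness of the circulation at the
   3-valent vertices makes these orientations acyclic, so a potential F on the
   vertices strictly decreasing along them exists, and D_e := F(tgt e) - F(src e)
   makes f beta exact. *)

(** * Smooth functions of one variable *)

Definition smooth_at (g : R -> R) (x : R) : Prop := forall n, ex_derive_n g n x.
Definition smooth_near (g : R -> R) (x : R) : Prop := locally x (smooth_at g).
Definition smooth (g : R -> R) : Prop := forall x, smooth_at g x.

Lemma locally_of_radius (x : R) (P : R -> Prop) (d : R) : 0 < d ->
  (forall y, Rabs (y - x) < d -> P y) -> locally x P.
Proof. by move=> Hd H; exists (mkposreal d Hd) => y Hy; apply: H. Qed.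

Lemma radius_of_locally (x : R) (P : R -> Prop) : locally x P ->
  exists2 d, 0 < d & forall y, Rabs (y - x) < d -> P y.
Proof. by case=> e He; exists e; [apply: cond_pos | move=> y Hy; apply: He]. Qed.

Lemma Derive_n_Derive (h : R -> R) (k : nat) (y : R) :
  Derive_n (Derive h) k y = Derive_n h k.+1 y.
Proof. by have := Derive_n_comp h k 1 y; rewrite Nat.add_1_r => <-. Qed.

Lemma ex_derive_n_Derive (h : R -> R) (n : nat) (x : R) :
  ex_derive h x -> (ex_derive_n (Derive h) n x <-> ex_derive_n h n.+1 x).
Proof.
move=> H1; case: n => [|k] /=; first by split.
by split; apply: ex_derive_ext => t; rewrite Derive_n_Derive.
Qed.

Lemma smooth_at_Derive h x : smooth_at h x -> smooth_at (Derive h) x.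
Proof. by move=> H n; apply/ex_derive_n_Derive; [apply: (H 1%nat) | apply: H]. Qed.

Lemma smooth_near_at g x : smooth_near g x -> smooth_at g x.
Proof. exact: locally_singleton. Qed.

Lemma smooth_near_ex_derive f x : smooth_near f x -> ex_derive f x.
Proof. by move=> H; exact (smooth_near_at H 1%nat). Qed.

Lemma smooth_near_continuous f x : smooth_near f x -> continuous f x.
Proof. by move=> H; apply: ex_derive_continuous; apply: smooth_near_ex_derive. Qed.

Lemma smooth_near_locally g x : smooth_near g x -> locally x (smooth_near g).
Proof. exact: locally_locally. Qed.

Lemma smooth_near_ext_loc f g x :
  locally x (fun y => f y = g y) -> smooth_near f x -> smooth_near g x.
Proof.
move=> /locally_locally He Hf.
apply: filter_imp (filter_and _ _ He Hf) => y [Hy1 Hy2] n.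
exact: ex_derive_n_ext_loc Hy1 (Hy2 n).
Qed.

Lemma smooth_near_ext f g x : (forall t, f t = g t) -> smooth_near f x -> smooth_near g x.
Proof. by move=> E; apply: smooth_near_ext_loc; apply: filter_forall. Qed.

Lemma smooth_near_const a x : smooth_near (fun _ => a) x.
Proof. by apply: filter_forall => y n; apply: ex_derive_n_const. Qed.

Lemma smooth_near_id x : smooth_near (fun t => t) x.
Proof.
apply: filter_forall => y n.
apply: (ex_derive_n_ext (fun t => t ^ 1)); first by move=> t /=; ring.
exact: ex_derive_n_pow.
Qed.

Lemma smooth_near_plus f g x :
  smooth_near f x -> smooth_near g x -> smooth_near (fun t => f t + g t) x.
Proof.
move=> /smooth_near_locally Hf /smooth_near_locally Hg.
apply: filter_imp (filter_and _ _ Hf Hg) => y [Hy1 Hy2] n.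
by apply: ex_derive_n_plus; [move: Hy1 | move: Hy2]; apply: filter_imp => z Hz k _.
Qed.

Lemma smooth_near_scal a f x : smooth_near f x -> smooth_near (fun t => a * f t) x.
Proof. by apply: filter_imp => y Hy n; apply: ex_derive_n_scal_l. Qed.

Lemma smooth_near_Derive f x : smooth_near f x -> smooth_near (Derive f) x.
Proof. by apply: filter_imp => y; apply: smooth_at_Derive. Qed.

Lemma smooth_near_mult_upto n : forall f g x, smooth_near f x -> smooth_near g x ->
  forall k, (k <= n)%coq_nat -> ex_derive_n (fun t => f t * g t) k x.
Proof.
elim: n => [|n IH] f g x Hf Hg k Hk; first by have -> : k = 0%nat by lia.
have [Hkn|Hkn] := Nat.le_gt_cases k n; first exact: IH.
have -> : k = n.+1 by lia.
apply/ex_derive_n_Derive.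
  by apply: ex_derive_mult; apply: smooth_near_ex_derive.
have Hloc : locally x (fun y => Derive f y * g y + f y * Derive g y
                                = Derive (fun t => f t * g t) y).
{ apply: filter_imp (filter_and _ _ Hf Hg) => y [H1 H2].
  by symmetry; apply: Derive_mult; [apply: (H1 1%nat) | apply: (H2 1%nat)]. }
eapply ex_derive_n_ext_loc; first exact: Hloc.
move: Hf Hg => /smooth_near_locally Hf /smooth_near_locally Hg.
apply: ex_derive_n_plus; apply: filter_imp (filter_and _ _ Hf Hg) => y [H1 H2] j Hj;
  apply: IH => //; exact: smooth_near_Derive.
Qed.

Lemma smooth_near_mult f g x :
  smooth_near f x -> smooth_near g x -> smooth_near (fun t => f t * g t) x.
Proof.
move=> /smooth_near_locally Hf /smooth_near_locally Hg.
apply: filter_imp (filter_and _ _ Hf Hg) => y [H1 H2] n.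
exact: (smooth_near_mult_upto H1 H2 (le_n n)).
Qed.

Lemma smooth_smooth_near g x : smooth g -> smooth_near g x.
Proof. by move=> H; apply: filter_forall. Qed.

Lemma smooth_on_smooth_near g p d y :
  smooth_on g p d -> Rabs (y - p) < d -> smooth_near g y.
Proof.
move=> Hs Hy; apply: (locally_of_radius (d := d - Rabs (y - p))); first lra.
move=> z Hz n; apply: Hs.
have := Rabs_triang (z - y) (y - p); have -> : z - y + (y - p) = z - p by ring.
lra.
Qed.

Lemma smooth_ext f g : (forall t, f t = g t) -> smooth f -> smooth g.
Proof. by move=> E H x n; apply: ex_derive_n_ext E (H x n). Qed.

Lemma smooth_comp_affine f a b : smooth f -> smooth (fun t => f (a * t + b)).
Proof.
move=> Hf x n; apply: (ex_derive_n_comp_scal (fun y => f (y + b)) a n x).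
by apply: filter_forall => y k _; apply: ex_derive_n_comp_trans; apply: Hf.
Qed.

Lemma smooth_mult f g : smooth f -> smooth g -> smooth (fun t => f t * g t).
Proof.
move=> Hf Hg x; apply: smooth_near_at.
by apply: smooth_near_mult; apply: smooth_smooth_near.
Qed.

Lemma smooth_scal a f : smooth f -> smooth (fun t => a * f t).
Proof. by move=> Hf x; apply/smooth_near_at/smooth_near_scal/smooth_smooth_near. Qed.

Lemma smooth_continuous f x : smooth f -> continuous f x.
Proof. by move=> H; apply/smooth_near_continuous/smooth_smooth_near. Qed.

Lemma smooth_ex_RInt f a b : smooth f -> ex_RInt f a b.
Proof.
move=> H; apply: (@ex_RInt_continuous R_CompleteNormedModule) => z _.
exact: smooth_continuous.
Qed.

(** * A flat function and smooth cutoffs *)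

Inductive poly_with_deriv : (R -> R) -> (R -> R) -> Prop :=
| PWD_const a : poly_with_deriv (fun _ => a) (fun _ => 0)
| PWD_id : poly_with_deriv (fun u => u) (fun _ => 1)
| PWD_plus f f' g g' : poly_with_deriv f f' -> poly_with_deriv g g' ->
    poly_with_deriv (fun u => f u + g u) (fun u => f' u + g' u)
| PWD_mult f f' g g' : poly_with_deriv f f' -> poly_with_deriv g g' ->
    poly_with_deriv (fun u => f u * g u) (fun u => f' u * g u + f u * g' u).

Lemma poly_with_deriv_is_derive f f' :
  poly_with_deriv f f' -> forall u, is_derive f u (f' u).
Proof.
elim=> {f f'} [a|| f f' g g' _ IHf _ IHg | f f' g g' _ IHf _ IHg] u.
- exact: is_derive_const.
- exact: is_derive_id.
- exact: is_derive_plus.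
- by apply: is_derive_mult => // *; apply: Rmult_comm.
Qed.

Lemma poly_with_deriv_deriv f f' : poly_with_deriv f f' -> exists f'', poly_with_deriv f' f''.
Proof.
elim=> {f f'} [a|| f f' g g' _ [a Ha] _ [b Hb] | f f' g g' Hf [a Ha] Hg [b Hb]].
- by eexists; apply: PWD_const.
- by eexists; apply: PWD_const.
- by eexists; apply: PWD_plus; eauto.
- by eexists; apply: PWD_plus; apply: PWD_mult; eauto.
Qed.

Lemma poly_with_deriv_bound f f' : poly_with_deriv f f' ->
  exists C k, 0 <= C /\ forall u, 1 <= u -> Rabs (f u) <= C * u ^ k.
Proof.
elim=> {f f'} [a|| f f' g g' _ [C1 [k1 [HC1 H1]]] _ [C2 [k2 [HC2 H2]]]
               | f f' g g' _ [C1 [k1 [HC1 H1]]] _ [C2 [k2 [HC2 H2]]]].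
- exists (Rabs a), 0%nat; split; [apply: Rabs_pos | move=> /= *; lra].
- exists 1, 1%nat; split; [lra | move=> u Hu /=; rewrite Rabs_right; lra].
- exists (C1 + C2), (k1 + k2)%coq_nat; split; [lra | move=> u Hu].
  have p1 : 1 <= u ^ k1 by apply: pow_R1_Rle.
  have p2 : 1 <= u ^ k2 by apply: pow_R1_Rle.
  rewrite pow_add; apply: Rle_trans (Rabs_triang _ _) _.
  have h1 := H1 u Hu; have h2 := H2 u Hu.
  have : C1 * u ^ k1 <= C1 * (u ^ k1 * u ^ k2) by apply: Rmult_le_compat_l; nra.
  have : C2 * u ^ k2 <= C2 * (u ^ k1 * u ^ k2) by apply: Rmult_le_compat_l; nra.
  lra.
- exists (C1 * C2), (k1 + k2)%coq_nat; split; [nra | move=> u Hu].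
  rewrite pow_add Rabs_mult.
  have := H1 u Hu; have := H2 u Hu; have := Rabs_pos (f u); have := Rabs_pos (g u).
  move=> *; nra.
Qed.

Lemma exp_INR_mult (m : nat) y : exp (INR m * y) = exp y ^ m.
Proof.
elim: m => [|m IH]; first by rewrite Rmult_0_l exp_0.
by rewrite S_INR Rmult_plus_distr_r Rmult_1_l exp_plus IH /=; ring.
Qed.

Lemma pow_div_le_exp (u : R) (m : nat) : 0 <= u -> (0 < m)%coq_nat ->
  (u / INR m) ^ m <= exp u.
Proof.
move=> Hu Hm; have Hm' : 0 < INR m by apply: lt_0_INR.
have -> : exp u = exp (u / INR m) ^ m.
{ rewrite -exp_INR_mult; congr exp; field; lra. }
apply: pow_incr; split; first by apply: Rdiv_le_0_compat; lra.
by have := exp_ineq1_le (u / INR m); lra.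
Qed.

Definition exp_inv_poly (q : R -> R) (x : R) : R :=
  if Rlt_dec 0 x then q (/ x) * exp (- / x) else 0.

(* With u = 1/x: d/dx [q(u) exp(-u)] = u^2 (q u - q' u) exp(-u). *)
Definition exp_inv_poly_coef (q q' : R -> R) (u : R) : R := u * u * (q u + (-1) * q' u).

Lemma exp_inv_poly_coef_poly q q' : poly_with_deriv q q' ->
  exists q2', poly_with_deriv (exp_inv_poly_coef q q') q2'.
Proof.
move=> Hq; have [q'' Hq'] := poly_with_deriv_deriv Hq.
eexists; rewrite /exp_inv_poly_coef.
apply: PWD_mult (PWD_mult PWD_id PWD_id) (PWD_plus Hq (PWD_mult (PWD_const _) Hq')).
Qed.

Lemma poly_exp_vanish (q q' : R -> R) : poly_with_deriv q q' ->
  forall eps, 0 < eps -> exists2 U, 1 <= U &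
    forall u, U <= u -> Rabs (q u) * u * exp (- u) < eps.
Proof.
move=> Hq eps Heps.
have [C [k [HC Hb]]] := poly_with_deriv_bound Hq.
pose m := k.+2; have Hm : (0 < m)%coq_nat by rewrite /m; lia.
have HmR : 0 < INR m by apply: lt_0_INR.
pose K := INR m ^ m; have HK : 0 < K by apply: pow_lt.
exists (Rmax 1 (C * K / eps + 1)); first exact: Rmax_l.
move=> u Hu.
have Hu1 : 1 <= u := Rle_trans _ _ _ (Rmax_l _ _) Hu.
have Hu2 : C * K / eps + 1 <= u := Rle_trans _ _ _ (Rmax_r _ _) Hu.
have Hexp : (u / INR m) ^ m <= exp u by apply: pow_div_le_exp => //; lra.
have Hum : u ^ m = u ^ k * u * u by rewrite /m /=; ring.
rewrite /Rdiv Rpow_mult_distr pow_inv Hum -/K in Hexp.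
have Hukp : 0 < u ^ k by apply: pow_lt; lra.
rewrite exp_Ropp.
have Hstep : Rabs (q u) * u * / exp u <= C * u ^ k * u * / (u ^ k * u * u * / K).
{ apply: Rmult_le_compat.
  - by have := Rabs_pos (q u); nra.
  - by apply/Rlt_le/Rinv_0_lt_compat/exp_pos.
  - by apply: Rmult_le_compat_r; [lra | apply: Hb].
  - apply: Rinv_le_contravar Hexp.
    by repeat apply: Rmult_lt_0_compat; try apply: Rinv_0_lt_compat; lra. }
apply: Rle_lt_trans Hstep _.
have -> : C * u ^ k * u * / (u ^ k * u * u * / K) = C * K / u by field; lra.
apply: (Rmult_lt_reg_r u); first lra.
have -> : C * K / u * u = C * K by field; lra.
have : C * K / eps * eps < u * eps by apply: Rmult_lt_compat_r; lra.
have -> : C * K / eps * eps = C * K by field; lra.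
lra.
Qed.

Lemma exp_inv_poly_le0 q x : x <= 0 -> exp_inv_poly q x = 0.
Proof. by move=> Hx; rewrite /exp_inv_poly; case: Rlt_dec => // H; lra. Qed.

Lemma exp_inv_poly_gt0 q x : 0 < x -> exp_inv_poly q x = q (/ x) * exp (- / x).
Proof. by move=> Hx; rewrite /exp_inv_poly; case: Rlt_dec => // H; lra. Qed.

Lemma is_derive_exp_inv_poly_0 (q q' : R -> R) : poly_with_deriv q q' ->
  is_derive (exp_inv_poly q) 0 0.
Proof.
move=> Hq; apply/is_derive_Reals => eps Heps.
have [U HU HUb] := poly_exp_vanish Hq Heps.
have HU0 : 0 < / U by apply: Rinv_0_lt_compat; lra.
exists (mkposreal _ HU0) => h Hh0 /= Hh.
rewrite Rplus_0_l (exp_inv_poly_le0 _ (Rle_refl 0)).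
have [hp|hn] := Rlt_dec 0 h; last first.
  rewrite exp_inv_poly_le0; last lra.
  have -> : (0 - 0) / h - 0 = 0 by field.
  by rewrite Rabs_R0.
rewrite exp_inv_poly_gt0 // Rabs_right in Hh *; last lra.
have Hu : U <= / h by rewrite -(Rinv_inv U); apply: Rinv_le_contravar; lra.
have -> : (q (/ h) * exp (- / h) - 0) / h - 0 = q (/ h) * / h * exp (- / h)
  by field; lra.
rewrite !Rabs_mult (Rabs_right (/ h)); last by apply/Rle_ge/Rlt_le/Rinv_0_lt_compat.
by rewrite (Rabs_right (exp _)); [apply: HUb | apply/Rle_ge/Rlt_le/exp_pos].
Qed.

Lemma is_derive_exp_inv_poly (q q' : R -> R) : poly_with_deriv q q' ->
  forall x, is_derive (exp_inv_poly q) x (exp_inv_poly (exp_inv_poly_coef q q') x).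
Proof.
move=> Hq x; have [Hx|[->|Hx]] := Rtotal_order x 0.
- rewrite exp_inv_poly_le0; last lra.
  apply: (is_derive_ext_loc (fun _ => 0)); last exact: is_derive_const.
  apply: (locally_of_radius (d := - x)); first lra.
  by move=> y /Rabs_lt_between Hy; rewrite exp_inv_poly_le0 //; lra.
- by rewrite exp_inv_poly_le0; [apply: is_derive_exp_inv_poly_0 Hq | lra].
- rewrite exp_inv_poly_gt0 //.
  apply: (is_derive_ext_loc (fun y => q (/ y) * exp (- / y))).
  { apply: (locally_of_radius (d := x)) => // y /Rabs_lt_between Hy.
    by rewrite exp_inv_poly_gt0 //; lra. }
  have D1 : is_derive (fun y => / y) x (- 1 / x ^ 2).
  { by apply: (is_derive_inv (fun y => y)); [apply: is_derive_id | lra]. }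
  have D2 : is_derive (fun y => q (/ y)) x (scal (- 1 / x ^ 2) (q' (/ x))).
  { apply: (is_derive_comp q (fun y => / y)) D1.
    exact: poly_with_deriv_is_derive. }
  have D3 : is_derive (fun y => exp (- / y)) x (exp (- / x) * (/ x ^ 2)).
  { by auto_derive; [lra | field; lra]. }
  have D := is_derive_mult _ _ _ _ _ D2 D3 Rmult_comm.
  evar (l : R); have -> : exp_inv_poly_coef q q' (/ x) * exp (- / x) = l; last exact: D.
  rewrite /l /scal /plus /mult /= /mult /= /exp_inv_poly_coef; field; lra.
Qed.

Lemma smooth_exp_inv_poly q q' : poly_with_deriv q q' -> smooth (exp_inv_poly q).
Proof.
move=> Hq x n; elim: n q q' Hq => [|n IH] q q' Hq //.
apply/ex_derive_n_Derive; first exact: ex_intro _ _ (is_derive_exp_inv_poly Hq x).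
have [q2 Hq2] := exp_inv_poly_coef_poly Hq.
apply: (ex_derive_n_ext (exp_inv_poly (exp_inv_poly_coef q q'))); last exact: IH Hq2.
by move=> t; symmetry; apply/is_derive_unique/is_derive_exp_inv_poly.
Qed.

Definition flat : R -> R := exp_inv_poly (fun _ => 1).

Lemma flat_smooth : smooth flat.
Proof. exact: smooth_exp_inv_poly (PWD_const 1). Qed.

Lemma flat_gt0 x : 0 < x -> 0 < flat x.
Proof. by move=> Hx; rewrite /flat exp_inv_poly_gt0 // Rmult_1_l; apply: exp_pos. Qed.

Lemma flat_eq0 x : x <= 0 -> flat x = 0.
Proof. exact: exp_inv_poly_le0. Qed.

Lemma flat_ge0 x : 0 <= flat x.
Proof. by case: (Rlt_dec 0 x) => H; [apply/Rlt_le/flat_gt0 | rewrite flat_eq0; lra]. Qed.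

Definition hump (x : R) : R := flat (1 + x) * flat (1 - x).

Lemma hump_smooth : smooth hump.
Proof.
apply: smooth_mult.
- apply: (smooth_ext (f := fun t => flat (1 * t + 1))) (smooth_comp_affine _ _ flat_smooth).
  by move=> t; congr flat; ring.
- apply: (smooth_ext (f := fun t => flat (-1 * t + 1))) (smooth_comp_affine _ _ flat_smooth).
  by move=> t; congr flat; ring.
Qed.

Lemma hump_ge0 x : 0 <= hump x.
Proof. exact: Rmult_le_pos (flat_ge0 _) (flat_ge0 _). Qed.

Lemma hump_gt0 x : -1 < x < 1 -> 0 < hump x.
Proof. by move=> H; apply: Rmult_lt_0_compat; apply: flat_gt0; lra. Qed.

Lemma hump_eq0 x : 1 <= Rabs x -> hump x = 0.
Proof.
move=> H; rewrite /hump; case: (Rle_dec x 0) => Hx.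
- by rewrite Rabs_left1 in H; [rewrite (flat_eq0 (x := 1 + x)); [ring | lra] | lra].
- by rewrite Rabs_right in H; [rewrite (flat_eq0 (x := 1 - x)); [ring | lra] | lra].
Qed.

Lemma hump_ex_RInt a b : ex_RInt hump a b.
Proof. exact: smooth_ex_RInt hump_smooth. Qed.

Definition hump_mass : R := RInt hump (-1) 1.

Lemma hump_mass_gt0 : 0 < hump_mass.
Proof.
apply: RInt_gt_0; first lra.
- by move=> x Hx; apply: hump_gt0.
- by move=> x _; apply: smooth_continuous hump_smooth.
Qed.

Definition smooth_step (x : R) : R := RInt hump (-1) x / hump_mass.

Lemma is_derive_smooth_step x : is_derive smooth_step x (hump x / hump_mass).
Proof.
apply: (is_derive_ext (fun y => scal (/ hump_mass) (RInt hump (-1) y))).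
  by move=> t; rewrite /scal /= /mult /= /smooth_step /Rdiv Rmult_comm.
have -> : hump x / hump_mass = scal (/ hump_mass) (hump x).
  by rewrite /scal /= /mult /= /Rdiv Rmult_comm.
apply: is_derive_scal; apply: (is_derive_RInt hump (RInt hump (-1)) (-1) x).
- by apply: filter_forall => y; apply: (@RInt_correct R_CompleteNormedModule); apply: hump_ex_RInt.
- exact: smooth_continuous hump_smooth.
Qed.

Lemma smooth_step_smooth : smooth smooth_step.
Proof.
move=> x [|n] //; apply/ex_derive_n_Derive; first by eexists; apply: is_derive_smooth_step.
apply: (ex_derive_n_ext (fun t => / hump_mass * hump t)).
  by move=> t; rewrite (is_derive_unique _ _ _ (is_derive_smooth_step t)) /Rdiv Rmult_comm.
exact: smooth_scal hump_smooth x n.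
Qed.

Lemma smooth_step_low x : x <= -1 -> smooth_step x = 0.
Proof.
move=> H; rewrite /smooth_step (RInt_ext hump (fun _ => 0)).
  by rewrite RInt_const /scal /= /mult /= Rmult_0_r /Rdiv Rmult_0_l.
move=> t; rewrite Rmin_right ?Rmax_left; try lra.
by move=> Ht; apply: hump_eq0; rewrite Rabs_left; lra.
Qed.

Lemma smooth_step_high x : 1 <= x -> smooth_step x = 1.
Proof.
move=> H; rewrite /smooth_step -(RInt_Chasles hump (-1) 1 x) ?(RInt_ext hump (fun _ => 0) 1 x);
  try exact: hump_ex_RInt.
- rewrite RInt_const /scal /plus /= /mult /plus /= Rmult_0_r Rplus_0_r -/hump_mass.
  by field; apply: Rgt_not_eq hump_mass_gt0.
- move=> t; rewrite Rmin_left ?Rmax_right; try lra.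
  by move=> Ht; apply: hump_eq0; rewrite Rabs_right; lra.
Qed.

Lemma smooth_step_range x : 0 <= smooth_step x <= 1.
Proof.
case: (Rle_dec x (-1)) => [?|Hl]; first by rewrite smooth_step_low; lra.
case: (Rle_dec 1 x) => [?|Hh]; first by rewrite smooth_step_high; lra.
have HC := hump_mass_gt0.
have H1 : 0 <= RInt hump (-1) x.
  by apply: RInt_ge_0; [lra | apply: hump_ex_RInt | move=> *; apply: hump_ge0].
have H2 : 0 <= RInt hump x 1.
  by apply: RInt_ge_0; [lra | apply: hump_ex_RInt | move=> *; apply: hump_ge0].
have H3 : RInt hump (-1) x + RInt hump x 1 = hump_mass.
  by rewrite /hump_mass -(RInt_Chasles hump (-1) x 1) //; apply: hump_ex_RInt.
rewrite /smooth_step; split; first by apply: Rdiv_le_0_compat; lra.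
apply: (Rmult_le_reg_r hump_mass) => //.
by rewrite /Rdiv Rmult_assoc Rinv_l; lra.
Qed.

Definition plateau (x : R) : R := smooth_step (3 - 4 * x) * smooth_step (3 + 4 * x).

Lemma plateau_smooth : smooth plateau.
Proof.
apply: smooth_mult.
- apply: (smooth_ext (f := fun t => smooth_step (-4 * t + 3)));
    last exact: smooth_comp_affine smooth_step_smooth.
  by move=> t; congr smooth_step; ring.
- apply: (smooth_ext (f := fun t => smooth_step (4 * t + 3)));
    last exact: smooth_comp_affine smooth_step_smooth.
  by move=> t; congr smooth_step; ring.
Qed.

Lemma plateau_range x : 0 <= plateau x <= 1.
Proof.
rewrite /plateau; have := smooth_step_range (3 - 4 * x).
have := smooth_step_range (3 + 4 * x); nra.
Qed.

Lemma plateau_one x : Rabs x <= 1/2 -> plateau x = 1.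
Proof.
move/Rabs_le_between=> H.
by rewrite /plateau !smooth_step_high; [ring | lra | lra].
Qed.

Lemma plateau_zero x : 1 <= Rabs x -> plateau x = 0.
Proof.
move=> H; rewrite /plateau; case: (Rle_dec x 0) => Hx.
- rewrite Rabs_left1 in H; last lra.
  by rewrite (smooth_step_low (x := 3 + 4 * x)); [ring | lra].
- rewrite Rabs_right in H; last lra.
  by rewrite (smooth_step_low (x := 3 - 4 * x)); [ring | lra].
Qed.

Definition cutoff (r p t : R) : R := plateau ((t - p) / r).

Lemma cutoff_smooth r p : smooth (cutoff r p).
Proof.
apply: (smooth_ext (f := fun t => plateau (/ r * t + (- p / r))));
  last exact: smooth_comp_affine plateau_smooth.
by move=> t; rewrite /cutoff; congr plateau; rewrite /Rdiv; ring.
Qed.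

Lemma cutoff_range r p t : 0 <= cutoff r p t <= 1.
Proof. exact: plateau_range. Qed.

Lemma Rabs_div_pos x r : 0 < r -> Rabs (x / r) = Rabs x / r.
Proof. by move=> Hr; rewrite /Rdiv Rabs_mult (Rabs_right (/ r)) //; apply/Rle_ge/Rlt_le/Rinv_0_lt_compat. Qed.

Lemma cutoff_one r p t : 0 < r -> Rabs (t - p) <= r / 2 -> cutoff r p t = 1.
Proof.
move=> Hr H; apply: plateau_one; rewrite Rabs_div_pos //.
by apply: (Rmult_le_reg_r r) => //; rewrite /Rdiv Rmult_assoc Rinv_l; lra.
Qed.

Lemma cutoff_zero r p t : 0 < r -> r <= Rabs (t - p) -> cutoff r p t = 0.
Proof.
move=> Hr H; apply: plateau_zero; rewrite Rabs_div_pos //.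
by apply: (Rmult_le_reg_r r) => //; rewrite /Rdiv Rmult_assoc Rinv_l; lra.
Qed.

(** * Gluing local forms along an edge *)

Lemma continuous_Rmax0 (g : R -> R) x :
  continuous g x -> continuous (fun y => Rmax 0 (g y)) x.
Proof.
move=> H; apply: (continuous_ext (fun y => scal (/2) (plus (g y) (Rabs (g y))))).
{ move=> y; rewrite /scal /plus /= /mult /plus /= /Rmax.
  by case: Rle_dec => Hy; [rewrite Rabs_right | rewrite Rabs_left]; lra. }
apply: continuous_scal_r; apply: continuous_plus => //.
exact: continuous_Rabs_comp.
Qed.

Lemma RInt_gt0_at_point (g : R -> R) a b t0 : a < t0 < b ->
  (forall x, a <= x <= b -> continuous g x) ->
  (forall x, a < x < b -> 0 <= g x) -> 0 < g t0 -> 0 < RInt g a b.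
Proof.
move=> Ht0 Hc Hnn Hp.
have : locally t0 (fun y => g t0 / 2 < g y).
{ apply: (Hc t0 ltac:(lra)).
  by apply: (locally_of_radius (d := g t0 / 2)) => [|y /Rabs_lt_between]; lra. }
move=> /radius_of_locally [d Hd Hdy].
set u := Rmax a (t0 - d / 2); set v := Rmin b (t0 + d / 2).
have Hu1 : a <= u := Rmax_l _ _.
have Hu2 : u < t0 by apply: Rmax_lub_lt; lra.
have Hv1 : v <= b := Rmin_l _ _.
have Hv2 : t0 < v by apply: Rmin_glb_lt; lra.
have Hu3 : t0 - d / 2 <= u := Rmax_r _ _.
have Hv3 : v <= t0 + d / 2 := Rmin_r _ _.
have Ex p q : a <= p -> p <= q -> q <= b -> ex_RInt g p q.
{ move=> Hap Hpq Hqb; apply: (@ex_RInt_continuous R_CompleteNormedModule) => z.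
  by rewrite Rmin_left // Rmax_right // => Hz; apply: Hc; lra. }
have Eau : ex_RInt g a u by apply: Ex; lra.
have Eub : ex_RInt g u b by apply: Ex; lra.
have Euv : ex_RInt g u v by apply: Ex; lra.
have Evb : ex_RInt g v b by apply: Ex; lra.
rewrite -(RInt_Chasles g a u b) // -(RInt_Chasles g u v b) // /plus /=.
have : 0 <= RInt g a u by apply: RInt_ge_0 => // *; try apply: Hnn; lra.
have : 0 <= RInt g v b by apply: RInt_ge_0 => // *; try apply: Hnn; lra.
have : 0 < RInt g u v.
{ apply: RInt_gt_0 => [|x Hx|x Hx]; try lra; last by apply: Hc; lra.
  have : g t0 / 2 < g x by apply: Hdy; apply/Rabs_lt_between; lra.
  lra. }
lra.
Qed.

Definition cutoff_sum (r : R) (cs : seq (R * (R -> R))) (t : R) : R :=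
  foldr (fun pg acc => cutoff r pg.1 t * pg.2 t + acc) 0 cs.

Definition cutoff_rest (r : R) (cs : seq (R * (R -> R))) (t : R) : R :=
  foldr (fun pg acc => (1 - cutoff r pg.1 t) * acc) 1 cs.

Definition fill (Km Kp : R) (s : R -> R) (t : R) : R :=
  - (if Rlt_dec (t * s t) 0 then Km else Kp) * s t.

Definition edge_profile (r : R) (cs : seq (R * (R -> R))) (fl : R -> R) (t : R) : R :=
  cutoff_sum r cs t + cutoff_rest r cs t * fl t.


Lemma cutoff_rest_range r cs t : 0 <= cutoff_rest r cs t <= 1.
Proof. by elim: cs => [|i cs' IH] /=; [lra | have := cutoff_range r i.1 t; nra]. Qed.

Lemma cutoff_rest_smooth r cs x : smooth_near (cutoff_rest r cs) x.
Proof.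
elim: cs => [|i cs' IH]; first exact: smooth_near_const.
apply: (smooth_near_ext (f := fun t => (1 + -1 * cutoff r i.1 t) * cutoff_rest r cs' t)).
  by move=> t /=; ring.
apply: smooth_near_mult IH; apply: smooth_near_plus (smooth_near_const _ _) _.
exact/smooth_near_scal/smooth_smooth_near/cutoff_smooth.
Qed.

Lemma cutoff_term_smooth r p G y : 0 < r ->
  (forall z, Rabs (z - p) < 2 * r -> smooth_near G z) ->
  smooth_near (fun t => cutoff r p t * G t) y.
Proof.
move=> Hr HG; case: (Rlt_dec (Rabs (y - p)) (2 * r)) => Hy.
  by apply: smooth_near_mult (smooth_smooth_near _ (cutoff_smooth _ _)) (HG _ Hy).
apply: (smooth_near_ext_loc (f := fun _ => 0)); last exact: smooth_near_const.
apply: (locally_of_radius (d := r)) => // z Hz; rewrite cutoff_zero //; first ring.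
have := Rabs_triang_inv (y - p) (y - z); rewrite Rabs_minus_sym in Hz.
have -> : y - p - (y - z) = z - p by ring.
lra.
Qed.

Lemma cutoff_sum_smooth r cs y : 0 < r ->
  (forall i, List.In i cs -> forall z, Rabs (z - i.1) < 2 * r -> smooth_near i.2 z) ->
  smooth_near (cutoff_sum r cs) y.
Proof.
move=> Hr; elim: cs => [|i cs' IH] H; first exact: smooth_near_const.
apply: smooth_near_plus.
- by apply: cutoff_term_smooth => //; apply: H; left.
- by apply: IH => j Hj; apply: H; right.
Qed.

Lemma cutoff_rest_center r cs i t :
  List.In i cs -> cutoff r i.1 t = 1 -> cutoff_rest r cs t = 0.
Proof.
elim: cs => [|j cs' IH] //= [<-|Hi] H1; first by rewrite H1; ring.
by rewrite IH //; ring.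
Qed.

Lemma cutoff_rest_eq0 r cs t :
  cutoff_rest r cs t = 0 -> exists2 i, List.In i cs & cutoff r i.1 t = 1.
Proof.
elim: cs => [|j cs' IH] /= H; first lra.
have [Hj|Hrest] := Rmult_integral _ _ H; first by exists j; [left | lra].
by have [i Hi Hb] := IH Hrest; exists i; [right |].
Qed.

Lemma cutoff_rest_far r cs t :
  (forall i, List.In i cs -> cutoff r i.1 t = 0) -> cutoff_rest r cs t = 1.
Proof.
elim: cs => [|j cs' IH] //= H.
by rewrite H ?IH; [ring | move=> i Hi; apply: H; right | left].
Qed.

Lemma cutoff_sum_sign r cs t (st : R) :
  (forall i, List.In i cs -> cutoff r i.1 t * i.2 t * st <= 0) ->
  cutoff_sum r cs t * st <= 0.
Proof.
elim: cs => [|j cs' IH] /= H; first lra.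
have := H j (or_introl erefl); have := IH (fun i Hi => H i (or_intror Hi)); nra.
Qed.

Lemma cutoff_sum_sign_strict r cs t (st : R) :
  (forall i, List.In i cs -> cutoff r i.1 t * i.2 t * st <= 0) ->
  (exists2 i, List.In i cs & cutoff r i.1 t * i.2 t * st < 0) ->
  cutoff_sum r cs t * st < 0.
Proof.
elim: cs => [|j cs' IH] /= H [i Hi Hlt]; first by [].
have Hrest i' : List.In i' cs' -> cutoff r i'.1 t * i'.2 t * st <= 0 by move=> ?; apply: H; right.
case: Hi => [Eji|Hi].
- by subst j; have := cutoff_sum_sign Hrest; nra.
- by have := H j (or_introl erefl); have := IH Hrest (ex_intro2 _ _ i Hi Hlt); nra.
Qed.


Lemma cutoff_sum_eq0 r cs t :
  (forall k, List.In k cs -> cutoff r k.1 t = 0) -> cutoff_sum r cs t = 0.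
Proof.
elim: cs => [|j cs IH] //= H.
by rewrite H ?IH; [ring | move=> k Hk; apply: H; right | left].
Qed.

Lemma cutoff_sum_center r cs i t : List.NoDup (map fst cs) -> List.In i cs ->
  (forall j, List.In j cs -> j.1 <> i.1 -> cutoff r j.1 t = 0) ->
  cutoff r i.1 t = 1 -> cutoff_sum r cs t = i.2 t.
Proof.
elim: cs => [|j cs IH] //= /List.NoDup_cons_iff [Hnin Hnd] Hi Hz H1.
have [E|E] := Req_dec j.1 i.1.
- case: Hi => [Eji|Hi]; last by case: Hnin; rewrite E; apply List.in_map.
  subst j; rewrite H1 cutoff_sum_eq0; first ring.
  move=> k Hk; apply: Hz; first by right.
  by move=> Ek; apply: Hnin; rewrite -Ek; apply List.in_map.
- rewrite Hz; [ | by left | by []].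
  case: Hi => [Eji|Hi]; first by subst j.
  by rewrite IH //; [ring | move=> k Hk; apply: Hz; right].
Qed.

Lemma fill_locally_const Km Kp (s : R -> R) t : t <> 0 -> s t <> 0 ->
  locally t (fun y => s y = s t) -> locally t (fun y => fill Km Kp s y = fill Km Kp s t).
Proof.
move=> Ht Hs Hl.
have Hsame : locally t (fun y => 0 < y * t).
{ apply: (locally_of_radius (d := Rabs t)); first exact: Rabs_pos_lt.
  move=> y /Rabs_lt_between; case: (Rle_dec 0 t) => h;
    [rewrite Rabs_right | rewrite Rabs_left]; nra. }
apply: filter_imp (filter_and _ _ Hl Hsame) => y [E Hy]; rewrite /fill E.
have : 0 < y * t * (s t * s t) by apply: Rmult_lt_0_compat => //; nra.
by case: Rlt_dec; case: Rlt_dec => // h1 h2; nra.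
Qed.

(* s stands for sgn c on the edge [a, b]. *)
Record edge_setup (a b r : R) (cs : seq (R * (R -> R))) (s : R -> R) : Prop :=
  EdgeSetup {
  setup_lt : a < b;
  setup_r : 0 < r;
  setup_src : exists Ga, List.In (a, Ga) cs;
  setup_tgt : exists Gb, List.In (b, Gb) cs;
  setup_sep : forall i j, List.In i cs -> List.In j cs -> i.1 <> j.1 ->
    4 * r <= Rabs (i.1 - j.1);
  setup_nodup : List.NoDup (map fst cs);
  setup_range : forall i, List.In i cs -> a <= i.1 <= b;
  setup_smooth : forall i, List.In i cs -> forall y, Rabs (y - i.1) < 2 * r ->
    smooth_near i.2 y;
  setup_sign : forall i, List.In i cs -> forall t, a < t < b -> Rabs (t - i.1) < r ->
    t <> i.1 -> s t <> 0 -> i.2 t * s t < 0;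
  setup_regular : forall t, a < t < b -> (forall i, List.In i cs -> i.1 <> t) ->
    [/\ s t <> 0, t <> 0 & locally t (fun y => s y = s t)] }.

Section EdgeProfile.
Variables (a b r : R) (cs : seq (R * (R -> R))) (s : R -> R).
Hypothesis HS : edge_setup a b r cs s.

Definition core_int : R := RInt (fun t => t * cutoff_sum r cs t) a b.
Definition fill_int (sg : R) : R :=
  RInt (fun t => cutoff_rest r cs t * Rmax 0 (sg * (t * s t))) a b.

Lemma edge_profile_center Km Kp i t : List.In i cs ->
  Rabs (t - i.1) < r / 2 -> edge_profile r cs (fill Km Kp s) t = i.2 t.
Proof.
move=> Hi Ht; have Hr := setup_r HS.
have B1 : cutoff r i.1 t = 1 by apply: cutoff_one; lra.
rewrite /edge_profile (cutoff_rest_center Hi B1) (cutoff_sum_center (setup_nodup HS) Hi) //;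
  first ring.
move=> j Hj Hne; apply: cutoff_zero => //.
have := setup_sep HS Hj Hi Hne; have := Rabs_triang_inv (j.1 - i.1) (t - i.1).
have -> : j.1 - i.1 - (t - i.1) = - (t - j.1) by ring.
by rewrite Rabs_Ropp; lra.
Qed.

Lemma cutoff_rest_near_center i t : List.In i cs ->
  Rabs (t - i.1) < r / 2 -> cutoff_rest r cs t = 0.
Proof. by move=> Hi Ht; apply: (cutoff_rest_center Hi); apply: cutoff_one; have := setup_r HS; lra. Qed.

Lemma edge_profile_smooth Km Kp t : a < t < b ->
  smooth_near (edge_profile r cs (fill Km Kp s)) t.
Proof.
move=> Ht; apply: smooth_near_plus.
  exact: cutoff_sum_smooth (setup_r HS) (setup_smooth HS).
have Hr := setup_r HS.
have [[i [Hi Ei]]|Hno] := classic (exists i, List.In i cs /\ i.1 = t).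
- apply: (smooth_near_ext_loc (f := fun _ => 0)); last exact: smooth_near_const.
  apply: (locally_of_radius (d := r / 2)); first lra.
  move=> y Hy; have -> : cutoff_rest r cs y = 0 by apply: (cutoff_rest_near_center Hi); rewrite Ei.
  ring.
- have Hne i : List.In i cs -> i.1 <> t by move=> Hi Ei; apply: Hno; exists i.
  have [Hs0 Ht0 Hl] := setup_regular HS Ht Hne.
  apply: (smooth_near_ext_loc (f := fun y => cutoff_rest r cs y * fill Km Kp s t)).
    by apply: filter_imp (fill_locally_const Km Kp Ht0 Hs0 Hl) => y ->.
  exact: smooth_near_mult (cutoff_rest_smooth _ _ _) (smooth_near_const _ _).
Qed.

Lemma edge_profile_sign Km Kp t : 0 < Km -> 0 < Kp -> a < t < b ->
  (forall i, List.In i cs -> i.1 <> t) -> edge_profile r cs (fill Km Kp s) t * s t < 0.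
Proof.
move=> HKm HKp Ht Hne; have Hr := setup_r HS.
have [Hs0 Ht0 _] := setup_regular HS Ht Hne.
have Hterm i : List.In i cs -> cutoff r i.1 t * i.2 t * s t <= 0.
{ move=> Hi; case: (Rlt_dec (Rabs (t - i.1)) r) => h; last by rewrite cutoff_zero; lra.
  have h1 := setup_sign HS Hi Ht h (fun E => Hne i Hi (esym E)) Hs0.
  by have := cutoff_range r i.1 t; nra. }
have Hfill : fill Km Kp s t * s t < 0.
{ have : 0 < s t * s t by apply: Rsqr_pos_lt.
  by rewrite /fill; case: (Rlt_dec (t * s t) 0) => ? ? /=; nra. }
have Hw := cutoff_rest_range r cs t; rewrite /edge_profile.
have [Hw0|Hw0] := Req_dec (cutoff_rest r cs t) 0; last first.
  by have := cutoff_sum_sign Hterm; nra.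
have [i Hi Hb] := cutoff_rest_eq0 Hw0.
suff : cutoff_sum r cs t * s t < 0 by rewrite Hw0; lra.
apply: cutoff_sum_sign_strict Hterm _; exists i => //.
have Hlt : Rabs (t - i.1) < r.
  by case: (Rlt_dec (Rabs (t - i.1)) r) => // h; rewrite cutoff_zero in Hb; lra.
by rewrite Hb Rmult_1_l; apply: (setup_sign HS Hi Ht Hlt (fun E => Hne i Hi (esym E)) Hs0).
Qed.

Lemma fill_part_continuous sg z : a <= z <= b ->
  continuous (fun t => cutoff_rest r cs t * Rmax 0 (sg * (t * s t))) z.
Proof.
move=> Hz; have Hr := setup_r HS.
have [[i [Hi Ei]]|Hno] := classic (exists i, List.In i cs /\ i.1 = z).
- apply: (continuous_ext_loc _ (fun _ => 0) z); last exact: continuous_const.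
  apply: (locally_of_radius (d := r / 2)); first lra.
  move=> y Hy; have -> : cutoff_rest r cs y = 0 by apply: (cutoff_rest_near_center Hi); rewrite Ei.
  by rewrite Rmult_0_l.
- have Hne i : List.In i cs -> i.1 <> z by move=> Hi Ei; apply: Hno; exists i.
  have Hz' : a < z < b.
  { have [Ga Ha] := setup_src HS; have [Gb Hb] := setup_tgt HS.
    have := Hne _ Ha; have := Hne _ Hb; rewrite /=; lra. }
  have [_ _ Hl] := setup_regular HS Hz' Hne.
  apply: (continuous_ext_loc _ (fun t => cutoff_rest r cs t * Rmax 0 (sg * (t * s z))) z).
    by apply: filter_imp Hl => y ->.
  apply: (continuous_mult (cutoff_rest r cs) (fun t => Rmax 0 (sg * (t * s z)))).
    exact/smooth_near_continuous/cutoff_rest_smooth.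
  apply/continuous_Rmax0/smooth_near_continuous.
  apply: (smooth_near_ext (f := fun t => sg * (s z * t))); first by move=> t; ring.
  exact/smooth_near_scal/smooth_near_scal/smooth_near_id.
Qed.

Lemma fill_part_ex_RInt sg : ex_RInt (fun t => cutoff_rest r cs t * Rmax 0 (sg * (t * s t))) a b.
Proof.
apply: (@ex_RInt_continuous R_CompleteNormedModule) => z.
have Hab := setup_lt HS; rewrite Rmin_left ?Rmax_right; try lra.
exact: fill_part_continuous.
Qed.

Lemma edge_profile_RInt Km Kp :
  RInt (fun t => t * edge_profile r cs (fill Km Kp s) t) a b =
  core_int + Km * fill_int (-1) - Kp * fill_int 1.
Proof.
set f1 := fun t => t * cutoff_sum r cs t.
set f2 := fun t => cutoff_rest r cs t * Rmax 0 (-1 * (t * s t)).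
set f3 := fun t => cutoff_rest r cs t * Rmax 0 (1 * (t * s t)).
have E1 : ex_RInt f1 a b.
{ apply: (@ex_RInt_continuous R_CompleteNormedModule) => z _.
  apply/smooth_near_continuous/smooth_near_mult; first exact: smooth_near_id.
  exact: cutoff_sum_smooth (setup_r HS) (setup_smooth HS). }
have E2 : ex_RInt f2 a b := fill_part_ex_RInt (-1).
have E3 : ex_RInt f3 a b := fill_part_ex_RInt 1.
rewrite (RInt_ext _ (fun t => plus (f1 t) (plus (scal Km (f2 t)) (scal (- Kp) (f3 t))))).
{ rewrite RInt_plus //; last by apply: ex_RInt_plus; apply: ex_RInt_scal.
  rewrite RInt_plus; try exact: ex_RInt_scal.
  rewrite !RInt_scal // /core_int /fill_int -/f1 -/f2 -/f3.
  by rewrite /plus /scal /= /plus /mult /=; ring. }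
move=> t _; rewrite /f1 /f2 /f3 /edge_profile /fill /plus /scal /= /plus /mult /=.
case: Rlt_dec => h /=.
- by rewrite (Rmax_right 0 (-1 * _)) ?(Rmax_left 0 (1 * _)); try lra; ring.
- by rewrite (Rmax_left 0 (-1 * _)) ?(Rmax_right 0 (1 * _)); try lra; ring.
Qed.

Lemma center_le_tgt_sub i : List.In i cs -> i.1 <> b -> i.1 <= b - 4 * r.
Proof.
move=> Hi Hne; have [Gb Hb] := setup_tgt HS.
have := setup_sep HS Hi Hb Hne; have := setup_range HS Hi.
by rewrite /= => H1; rewrite Rabs_left1; lra.
Qed.

Lemma last_regular_point :
  [/\ a < b - 3 * r / 2 < b, (forall i, List.In i cs -> r <= Rabs (b - 3 * r / 2 - i.1))
    & cutoff_rest r cs (b - 3 * r / 2) = 1].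
Proof.
have Hr := setup_r HS; have [Ga Ha] := setup_src HS.
have Hfar i : List.In i cs -> r <= Rabs (b - 3 * r / 2 - i.1).
{ move=> Hi; have [E|E] := Req_dec i.1 b.
  - by rewrite E Rabs_left; lra.
  - by have := center_le_tgt_sub Hi E => H; rewrite Rabs_right; lra. }
split => //.
- have Hab := setup_lt HS; have := center_le_tgt_sub Ha; rewrite /= => H.
  have : a <= b - 4 * r by apply: H; lra.
  lra.
- by apply: cutoff_rest_far => i Hi; apply: cutoff_zero => //; apply: Hfar.
Qed.

Lemma fill_int_ge0 sg : 0 <= fill_int sg.
Proof.
apply: RInt_ge_0; [exact/Rlt_le/(setup_lt HS) | exact: fill_part_ex_RInt |].
by move=> x _; apply: Rmult_le_pos (proj1 (cutoff_rest_range _ _ _)) (Rmax_l _ _).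
Qed.

Lemma fill_int_gt0 sg :
  0 < sg * ((b - 3 * r / 2) * s (b - 3 * r / 2)) -> 0 < fill_int sg.
Proof.
move=> Hp; have [Ht0 _ Hw] := last_regular_point.
apply: (RInt_gt0_at_point Ht0); first exact: fill_part_continuous.
- by move=> x _; apply: Rmult_le_pos (proj1 (cutoff_rest_range _ _ _)) (Rmax_l _ _).
- by rewrite Hw Rmult_1_l Rmax_right; lra.
Qed.

End EdgeProfile.

Lemma fill_constants_exist A P N D : 0 <= P -> 0 <= N ->
  (P = 0 -> D < A) -> (N = 0 -> A < D) ->
  exists Km Kp, [/\ 0 < Km, 0 < Kp & A + Km * P - Kp * N = D].
Proof.
move=> HP HN HP0 HN0.
have [P0|Pp] := Req_dec P 0; have [N0|Np] := Req_dec N 0.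
- by have := HP0 P0; have := HN0 N0; lra.
- exists 1, ((A - D) / N); split; [lra | | subst; field]; try lra.
  by apply: Rdiv_lt_0_compat; have := HP0 P0; lra.
- exists ((D - A) / P), 1; split; [ | lra | subst; field]; try lra.
  by apply: Rdiv_lt_0_compat; have := HN0 N0; lra.
- exists ((Rmax (D - A) 0 + 1) / P), ((Rmax (A - D) 0 + 1) / N).
  have := Rmax_r (D - A) 0; have := Rmax_r (A - D) 0.
  split; try (apply: Rdiv_lt_0_compat; lra).
  have -> : A + (Rmax (D - A) 0 + 1) / P * P - (Rmax (A - D) 0 + 1) / N * N
            = A + Rmax (D - A) 0 - Rmax (A - D) 0 by field.
  by rewrite /Rmax; case: Rle_dec => h1; case: Rle_dec => h2; lra.
Qed.

(** * Signs, monotonicity of the circulation, and finiteness *)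

Lemma sgn_pos x : 0 < x -> sgn x = 1.
Proof. by move=> H; rewrite /sgn; case: (Rlt_dec 0 x) => h. Qed.

Lemma sgn_neg x : x < 0 -> sgn x = -1.
Proof.
by move=> H; rewrite /sgn; case: (Rlt_dec 0 x) => h1; [lra | case: (Rlt_dec x 0) => h2].
Qed.

Lemma sgn_0 : sgn 0 = 0.
Proof. by rewrite /sgn; case: (Rlt_dec 0 0) => h1; [lra | case: (Rlt_dec 0 0) => h2]. Qed.

Lemma sgn_neq0 x : x <> 0 -> sgn x <> 0.
Proof. by move=> H; case: (Rlt_dec 0 x) => h; [rewrite sgn_pos | rewrite sgn_neg]; lra. Qed.

Lemma mul_lt0_of_sgn_opp g y : sgn g = - sgn y -> y <> 0 -> g * sgn y < 0.
Proof.
move=> E Hy.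
have Eg : g < 0 -> sgn g = -1 by apply: sgn_neg.
have Eg' : 0 < g -> sgn g = 1 by apply: sgn_pos.
have Eg0 : g = 0 -> sgn g = 0 by move->; apply: sgn_0.
have [h|[//|h]] := Rtotal_order y 0; [rewrite (sgn_neg h) in E * | rewrite (sgn_pos h) in E *];
  have [hg|[hg|hg]] := Rtotal_order g 0;
  first [move: (Eg hg) | move: (Eg' hg) | move: (Eg0 hg)] => E'; lra.
Qed.

Lemma sgn_locally_const (c0 : R -> R) t : continuous c0 t -> c0 t <> 0 ->
  locally t (fun y => sgn (c0 y) = sgn (c0 t)).
Proof.
move=> Hc Hn.
have : locally t (fun y => Rabs (c0 y - c0 t) < Rabs (c0 t)).
{ apply: (Hc (fun z => Rabs (z - c0 t) < Rabs (c0 t))).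
  by apply: (locally_of_radius (d := Rabs (c0 t))) => //; apply: Rabs_pos_lt. }
apply: filter_imp => y /Rabs_lt_between Hy.
case: (Rlt_dec 0 (c0 t)) => h.
- by rewrite Rabs_right in Hy; [rewrite !sgn_pos | ]; lra.
- by rewrite Rabs_left in Hy; [rewrite !sgn_neg | ]; lra.
Qed.

Lemma sgn_of_left_limit (g : R -> R) p q l : p < q ->
  (forall x, p <= x < q -> continuous g x) -> filterlim g (at_left q) (locally l) ->
  l <> 0 -> (forall x, p <= x < q -> g x <> 0) -> sgn (g p) = sgn l.
Proof.
move=> Hpq Hc Hlim Hl Hnz.
have [t1 [Ht1 Hc1]] : exists t1, p < t1 < q /\ Rabs (g t1 - l) < Rabs l.
{ have : at_left q (fun y => Rabs (g y - l) < Rabs l).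
    by apply: (Hlim (fun y => Rabs (y - l) < Rabs l)); apply: (locally_of_radius (d := Rabs l));
      [apply: Rabs_pos_lt | ].
  move=> /radius_of_locally [d Hd Hdy].
  set t1 := Rmax ((p + q) / 2) (q - d / 2).
  have h1 : (p + q) / 2 <= t1 := Rmax_l _ _; have h2 : q - d / 2 <= t1 := Rmax_r _ _.
  have h3 : t1 < q by apply: Rmax_lub_lt; lra.
  by exists t1; split; [lra | apply: Hdy => //; apply/Rabs_lt_between; lra]. }
have Hpt x : p <= x <= t1 -> continuity_pt g x.
  by move=> Hx; apply/continuity_pt_filterlim/Hc; lra.
have Hnzp : g p <> 0 by apply: Hnz; lra.
move/Rabs_lt_between: Hc1 => Hc1.
case: (Rlt_dec 0 l) => hl.
- rewrite Rabs_right in Hc1; last lra.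
  rewrite (sgn_pos hl) sgn_pos //.
  case: (Rlt_dec 0 (g p)) => // hp.
  have [z [Hz Hgz]] := Ranalysis5.IVT_interv g p t1 Hpt ltac:(lra) ltac:(lra) ltac:(lra).
  by case: (Hnz z); lra.
- rewrite Rabs_left in Hc1; last lra.
  rewrite (sgn_neg (x := l)) ?sgn_neg //; try lra.
  case: (Rlt_dec (g p) 0) => // hp.
  have Hpt' x : p <= x <= t1 -> continuity_pt (fun y => - g y) x.
    by move=> Hx; apply/continuity_pt_opp/Hpt.
  have [z [Hz Hgz]] :=
    Ranalysis5.IVT_interv (fun y => - g y) p t1 Hpt' ltac:(lra) ltac:(lra) ltac:(lra).
  by case: (Hnz z); lra.
Qed.

Lemma circulation_monotone a b (c0 rho0 : R -> R) :
  (forall t, a < t < b -> 0 < rho0 t /\ forall n, ex_derive_n rho0 n t) ->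
  (forall x y, a < x -> x < y -> y < b -> c0 y - c0 x = RInt (fun t => t * rho0 t) x y) ->
  forall x y, a < x -> x < y -> y < b ->
    (0 <= x -> c0 x < c0 y) /\ (y <= 0 -> c0 y < c0 x).
Proof.
move=> Hr Hc x y Hx Hxy Hy.
have Hcont t : x <= t <= y -> continuous (fun t => t * rho0 t) t.
{ move=> Ht; apply: (continuous_mult (fun t => t) rho0); first exact: continuous_id.
  by apply: ex_derive_continuous; have [_ Hd] := Hr t ltac:(lra); exact: (Hd 1%nat). }
have Ex : ex_RInt (fun t => t * rho0 t) x y.
{ apply: (@ex_RInt_continuous R_CompleteNormedModule) => z.
  by rewrite Rmin_left ?Rmax_right; try lra; move=> Hz; apply Hcont. }
have := Hc x y Hx Hxy Hy; split => H0.
- suff : 0 < RInt (fun t => t * rho0 t) x y by lra.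
  apply: RInt_gt_0 => // t Ht.
  by apply: Rmult_lt_0_compat; [lra | case: (Hr t ltac:(lra))].
- suff : 0 < RInt (fun t => opp (t * rho0 t)) x y.
    by rewrite RInt_opp // /opp /=; lra.
  apply: RInt_gt_0 => // t Ht.
  + have [Hrt _] := Hr t ltac:(lra).
    by rewrite /opp /=; nra.
  + by apply: continuous_opp; apply Hcont.
Qed.

Lemma list_of_subsingleton (Q : R -> Prop) : (forall x y, Q x -> Q y -> x = y) ->
  exists l : seq R, List.NoDup l /\ forall t, List.In t l <-> Q t.
Proof.
move=> Hu; have [[z Hz]|Hn] := classic (exists z, Q z).
- exists [:: z]; split; first by constructor; [case | constructor].
  by move=> t; split=> [[<-|[]] // | Ht]; left; apply: Hu.
- by exists [::]; split; [constructor | move=> t; split=> [[]|Ht]; apply: Hn; exists t].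
Qed.

Lemma list_of_disjoint_union (Q1 Q2 : R -> Prop) : (forall x, Q1 x -> Q2 x -> False) ->
  (exists l : seq R, List.NoDup l /\ forall t, List.In t l <-> Q1 t) ->
  (exists l : seq R, List.NoDup l /\ forall t, List.In t l <-> Q2 t) ->
  exists l : seq R, List.NoDup l /\ forall t, List.In t l <-> (Q1 t \/ Q2 t).
Proof.
move=> Hd [l1 [N1 H1]] [l2 [N2 H2]]; exists (l1 ++ l2); split.
- by apply: List.NoDup_app => // x /H1 Hx1 /H2; apply: Hd.
- by move=> t; rewrite List.in_app_iff H1 H2.
Qed.

(* A function decreasing on the negatives and increasing on the positives
   vanishes at most once on each side of 0. *)
Lemma exceptional_list a b (c0 : R -> R) :
  (forall x y, a < x -> x < y -> y < b ->
     (0 <= x -> c0 x < c0 y) /\ (y <= 0 -> c0 y < c0 x)) ->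
  exists l : seq R, List.NoDup l /\
    forall t, List.In t l <-> (a < t < b /\ (t = 0 \/ c0 t = 0)).
Proof.
move=> Hm.
have Lneg : exists l : seq R, List.NoDup l /\
    forall t, List.In t l <-> (a < t < b /\ t < 0 /\ c0 t = 0).
{ apply: list_of_subsingleton => x y [Hx1 [Hx2 Hx3]] [Hy1 [Hy2 Hy3]].
  have [h|[//|h]] := Rtotal_order x y.
  - by have := proj2 (Hm x y ltac:(lra) h ltac:(lra)) ltac:(lra); lra.
  - by have := proj2 (Hm y x ltac:(lra) h ltac:(lra)) ltac:(lra); lra. }
have L0 : exists l : seq R, List.NoDup l /\ forall t, List.In t l <-> (a < t < b /\ t = 0).
  by apply: list_of_subsingleton => x y [_ ->] [_ ->].
have Lpos : exists l : seq R, List.NoDup l /\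
    forall t, List.In t l <-> (a < t < b /\ 0 < t /\ c0 t = 0).
{ apply: list_of_subsingleton => x y [Hx1 [Hx2 Hx3]] [Hy1 [Hy2 Hy3]].
  have [h|[//|h]] := Rtotal_order x y.
  - by have := proj1 (Hm x y ltac:(lra) h ltac:(lra)) ltac:(lra); lra.
  - by have := proj1 (Hm y x ltac:(lra) h ltac:(lra)) ltac:(lra); lra. }
have D1 x : (a < x < b /\ x < 0 /\ c0 x = 0) -> (a < x < b /\ x = 0) -> False.
  by move=> [_ [? _]] [_ ?]; lra.
have D2 x : (a < x < b /\ x < 0 /\ c0 x = 0) \/ (a < x < b /\ x = 0) ->
    (a < x < b /\ 0 < x /\ c0 x = 0) -> False.
  by move=> [[_ [? _]]|[_ ?]] [_ [? _]]; lra.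
have [l [Hn Hl]] := list_of_disjoint_union D2 (list_of_disjoint_union D1 Lneg L0) Lpos.
exists l; split => // t; rewrite Hl; split.
- by case=> [[[h1 [h2 h3]]|[h1 h2]]|[h1 [h2 h3]]]; split; auto.
- move=> [h1 [h2|h2]]; first by left; right.
  by have [h|[h|h]] := Rtotal_order t 0; [left; left | left; right | right].
Qed.

(** * A potential decreasing along an acyclic relation *)

Lemma exists_argmax_seq (T : eqType) (g : T -> R) (s : seq T) (y : T) :
  exists2 w, w \in y :: s & forall x, x \in y :: s -> g x <= g w.
Proof.
elim: s y => [|z s IH] y.
  by exists y; [rewrite mem_head | move=> x; rewrite mem_seq1 => /eqP ->; lra].
have [w Hw Hmax] := IH z.
case: (Rle_dec (g y) (g w)) => h.
- exists w; first by rewrite in_cons Hw orbT.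
  by move=> x; rewrite in_cons => /orP [/eqP ->|/Hmax].
- exists y; first exact: mem_head.
  by move=> x; rewrite in_cons => /orP [/eqP ->|/Hmax]; lra.
Qed.

Definition forced_rel (V E : finType) (src tgt : E -> V) (P N : pred E) : rel V :=
  fun u v => [exists e, ((src e == u) && (tgt e == v) && P e) ||
                        ((tgt e == u) && (src e == v) && N e)].

(* A cycle turns back at a vertex w where f is maximal along it; both steps at w
   use edges ending at w, the first a P-edge and the second an N-edge. *)
Lemma forced_rel_acyclic (V E : finType) (src tgt : E -> V) (fv : V -> R) (P N : pred E) :
  (forall e, fv (src e) < fv (tgt e)) ->
  (forall e1 e2, tgt e1 = tgt e2 -> P e1 -> N e2 -> False) ->
  forall u v, forced_rel src tgt P N u v -> ~ connect (forced_rel src tgt P N) v u.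
Proof.
move=> Hf Hm u v Huv /connectP [p Hp Hlast].
have Hcyc : cycle (forced_rel src tgt P N) (v :: p).
  by rewrite /cycle rcons_path Hp /= -Hlast.
have [w Hw Hmax] := exists_argmax_seq fv p v.
have Hpin : prev (v :: p) w \in v :: p by rewrite mem_prev.
have Hnin : next (v :: p) w \in v :: p by rewrite mem_next.
move: (prev_cycle Hcyc Hw) (next_cycle Hcyc Hw) (Hmax _ Hpin) (Hmax _ Hnin).
move=> /existsP [e1 /orP [/andP [/andP [/eqP E1 /eqP E2] P1]|/andP [/andP [/eqP E1 /eqP E2] N1]]];
move=> /existsP [e2 /orP [/andP [/andP [/eqP F1 /eqP F2] P2]|/andP [/andP [/eqP F1 /eqP F2] N2]]].
- by rewrite -F2 -F1 => _; have := Hf e2; lra.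
- by move=> _ _; apply: (Hm e1 e2) => //; rewrite E2 F1.
- by rewrite -E1 -E2 => ? _; have := Hf e1; lra.
- by rewrite -E1 -E2 => ? _; have := Hf e1; lra.
Qed.

Definition height (V : finType) (D : rel V) (v : V) : nat := #|[pred x | connect D x v]|.

Lemma height_lt (V : finType) (D : rel V) u v :
  D u v -> ~ connect D v u -> (height D u < height D v)%N.
Proof.
move=> Huv Hvu; apply: proper_card; apply/properP; split.
- by apply/subsetP => x; rewrite !inE => Hx; apply: connect_trans Hx (connect1 Huv).
- by exists v; rewrite inE ?connect0 //; apply/negP.
Qed.

Section Exactness.
Variables (V E : finType) (src tgt : E -> V) (fv : V -> R).
Variables (b : gpoint V E -> R) (F : V -> R).
Hypothesis HF : forall e, edge_int src tgt fv b e = F (tgt e) - F (src e).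

Lemma walk_int_chain s l : chain src tgt s l ->
  walk_int src tgt fv b (s :: l) = F (step_end src tgt (last s l)) - F (step_start src tgt s).
Proof.
elim: l s => [|s' l IH] s /=.
  by rewrite /walk_int /= HF /step_end /step_start; case: s.2 => _; ring.
move=> [Hes Hch]; move: (IH s' Hch); rewrite /walk_int /= => ->.
by rewrite HF; move: Hes; rewrite /step_end /step_start; case: s.2 => ->; ring.
Qed.

Lemma exact_of_potential : exact_f_form src tgt fv b.
Proof. by move=> [|s l] //= [Hch Hcl]; rewrite walk_int_chain // Hcl; ring. Qed.

End Exactness.

Lemma uniform_radius {A : Type} (l : list A) (Q : A -> R -> Prop) :
  (forall x r r', 0 < r' -> r' <= r -> Q x r -> Q x r') ->
  (forall x, List.In x l -> exists2 r, 0 < r & Q x r) ->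
  exists2 r, 0 < r & forall x, List.In x l -> Q x r.
Proof.
move=> Hmono; elim: l => [|y l IH] H; first by exists 1 => //; lra.
have [r1 Hr1 Q1] := H y (or_introl erefl).
have [r2 Hr2 Q2] := IH (fun x Hx => H x (or_intror Hx)).
have Hm : 0 < Rmin r1 r2 by apply: Rmin_pos.
exists (Rmin r1 r2) => // x [<-|Hx].
- exact: Hmono Hm (Rmin_l _ _) Q1.
- exact: Hmono Hm (Rmin_r _ _) (Q2 x Hx).
Qed.

Lemma In_enum (T : finType) (x : T) : List.In x (enum T).
Proof.
have : x \in enum T by rewrite mem_enum.
by elim: (enum T) => [|y s IH] //=; rewrite in_cons => /orP [/eqP ->|/IH]; [left | right].
Qed.

Lemma finite_Rabs_bound (T : finType) (g : T -> R) :
  exists2 L, 0 < L & forall x, Rabs (g x) < L.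
Proof.
suff [L HL H] : exists2 L, 0 < L & forall x, List.In x (enum T) -> Rabs (g x) < L.
  by exists L => // x; apply: H (In_enum x).
elim: (enum T) => [|y l [L HL H]]; first by exists 1 => //; lra.
have := Rabs_pos (g y); exists (L + Rabs (g y) + 1) => [|x [<-|/H]]; lra.
Qed.

Lemma radius_exists (E : finType) (pts ds : E -> list R) :
  (forall e d, List.In d (ds e) -> 0 < d) ->
  exists2 r, 0 < r & forall e,
    (forall p q, List.In p (pts e) -> List.In q (pts e) -> p <> q -> 4 * r <= Rabs (p - q)) /\
    (forall d, List.In d (ds e) -> 2 * r <= d).
Proof.
move=> Hds.
pose Q e r := (forall p q, List.In p (pts e) -> List.In q (pts e) -> p <> q ->
                 4 * r <= Rabs (p - q)) /\ (forall d, List.In d (ds e) -> 2 * r <= d).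
suff [r Hr HQ] : exists2 r, 0 < r & forall e, List.In e (enum E) -> Q e r.
  by exists r => // e; apply: HQ (In_enum e).
apply: uniform_radius => [x r r' Hr' Hle [H1 H2]|e _].
  by split=> [p q Hp Hq Hpq | d Hd]; [have := H1 p q Hp Hq Hpq | have := H2 d Hd]; lra.
have [r1 Hr1 Q1] : exists2 r, 0 < r & forall pq, List.In pq (List.list_prod (pts e) (pts e)) ->
    pq.1 <> pq.2 -> 4 * r <= Rabs (pq.1 - pq.2).
{ apply: uniform_radius => [x r r' _ Hle H Hne|[p q] _]; first by have := H Hne; lra.
  case: (Req_dec p q) => Epq; first by exists 1 => //; lra.
  exists (Rabs (p - q) / 4) => [|_ /=]; last lra.
  by apply: Rdiv_lt_0_compat; [apply: Rabs_pos_lt; lra | lra]. }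
have [r2 Hr2 Q2] : exists2 r, 0 < r & forall d, List.In d (ds e) -> 2 * r <= d.
{ apply: uniform_radius => [x r r' _ Hle H|d Hd]; first lra.
  by exists (d / 2); have := Hds e d Hd; lra. }
exists (Rmin r1 r2); first exact: Rmin_pos.
have := Rmin_l r1 r2; have := Rmin_r r1 r2.
split=> [p q Hp Hq Hpq | d Hd].
- by have := Q1 (p, q) (List.in_prod _ _ _ _ Hp Hq) Hpq; rewrite /=; lra.
- by have := Q2 d Hd; lra.
Qed.

(** * Local data at the exceptional points *)

Section LocalData.
Variables (V E : finType) (src tgt : E -> V) (fv : V -> R) (c : E -> R -> R).
Variables (U : gpoint V E -> gpoint V E -> Prop) (beta : gpoint V E -> gpoint V E -> R).
Hypothesis Hloc : forall xi, exceptional src tgt fv c xi ->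
  openG src tgt fv (U xi) /\ U xi xi /\ oneform_on src tgt fv (U xi) (beta xi) /\
  (forall y, onG src tgt fv y -> U xi y -> y <> xi -> ~ is_vertex y ->
     sgn (beta xi y) = - sgn (cval c y)).

Record vertex_chart (v : V) (d : R) (g : R -> R) : Prop := VertexChart {
  vchart_pos : 0 < d;
  vchart_smooth : smooth_on g (fv v) d;
  vchart_self : U (PV v) (PV v);
  vchart_at : beta (PV v) (PV v) = g (fv v);
  vchart_near : forall e t, incident src tgt v e -> fv (src e) < t < fv (tgt e) ->
    Rabs (t - fv v) < d ->
    [/\ U (PV v) (PE e t), beta (PV v) (PE e t) = g t & sgn (g t) = - sgn (c e t)] }.

Record interior_chart (e : E) (z d : R) (g : R -> R) : Prop := InteriorChart {
  ichart_pos : 0 < d;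
  ichart_smooth : smooth_on g z d;
  ichart_near : forall t, fv (src e) < t < fv (tgt e) -> Rabs (t - z) < d ->
    [/\ U (PE e z) (PE e t), beta (PE e z) (PE e t) = g t &
        t <> z -> sgn (g t) = - sgn (c e t)] }.

Lemma vertex_chart_exists v : exists d g, vertex_chart v d g.
Proof.
have [Hop [Hself [Hform Hsg]]] := @Hloc (PV v) (conj I I).
have [d1 [Hd1 H1]] := Hop (PV v) I Hself.
have [d2 [g [Hd2 [Hsm H2]]]] := Hform (PV v) I Hself.
have m1 := Rmin_l d1 d2; have m2 := Rmin_r d1 d2.
exists (Rmin d1 d2), g; split => //; first exact: Rmin_pos.
- by move=> n y Hy; apply: Hsm => /=; lra.
- exact: H2.
- move=> e t Hinc Ht Hd.
  have HU : U (PV v) (PE e t) by apply: H1 => //=; split => //; lra.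
  have Hb : beta (PV v) (PE e t) = g t by apply: (H2 (PE e t)) => //=; split => //; lra.
  by split => //; rewrite -Hb; apply: Hsg.
Qed.

Lemma interior_chart_exists e z : exceptional src tgt fv c (PE e z) ->
  exists d g, interior_chart e z d g.
Proof.
move=> Hx; have [Hop [Hself [Hform Hsg]]] := Hloc Hx.
have Hon := proj1 Hx.
have [d1 [Hd1 H1]] := Hop (PE e z) Hon Hself.
have [d2 [g [Hd2 [Hsm H2]]]] := Hform (PE e z) Hon Hself.
have m1 := Rmin_l d1 d2; have m2 := Rmin_r d1 d2.
exists (Rmin d1 d2), g; split; first exact: Rmin_pos.
  by move=> n y Hy; apply: Hsm => /=; lra.
move=> t Ht Hd.
have HU : U (PE e z) (PE e t) by apply: H1 => //=; split => //; lra.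
have Hb : beta (PE e z) (PE e t) = g t by apply: (H2 (PE e t)) => //=; split => //; lra.
by split => // Htz; rewrite -Hb; apply: Hsg => // -[].
Qed.

Lemma charts_choice :
  (exists (dV : V -> R) (gV : V -> R -> R), forall v, vertex_chart v (dV v) (gV v)) /\
  (exists (dZ : E -> R -> R) (gZ : E -> R -> R -> R), forall e z,
     exceptional src tgt fv c (PE e z) -> interior_chart e z (dZ e z) (gZ e z)).
Proof.
split.
- have Hv v : exists dg : R * (R -> R), vertex_chart v dg.1 dg.2.
    by have [d [g H]] := vertex_chart_exists v; exists (d, g).
  have [dgV HV] := choice _ Hv.
  by exists (fun v => (dgV v).1), (fun v => (dgV v).2).
- have Hez e z : exists dg : R * (R -> R),
      exceptional src tgt fv c (PE e z) -> interior_chart e z dg.1 dg.2.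
  { case: (classic (exceptional src tgt fv c (PE e z))) => [Hx|Hx].
    - by have [d [g H]] := interior_chart_exists Hx; exists (d, g).
    - by exists (0, fun _ => 0). }
  have [dgZ HZ] := choice _ (fun e => choice _ (Hez e)).
  by exists (fun e z => (dgZ e z).1), (fun e z => (dgZ e z).2).
Qed.

End LocalData.

Lemma exceptional_points_list (V E : finType) (src tgt : E -> V) (fv : V -> R)
    (rho c : E -> R -> R) (cs ct : E -> R) e :
  interior_density_ok src tgt fv rho -> circ_limits src tgt fv rho c cs ct ->
  exists l : seq R, List.NoDup l /\
    forall t, List.In t l <-> exceptional src tgt fv c (PE e t).
Proof.
move=> Hrho Hcl; apply: exceptional_list; apply: (circulation_monotone (rho0 := rho e)).
- by move=> t Ht; apply: Hrho.
- by move=> x y Hx Hxy Hy; have [_ [_ [_ H]]] := Hcl e; apply: H.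
Qed.

(** * The glued form *)

Section Construction.
Variables (V E : finType) (src tgt : E -> V) (fv : V -> R) (rho c : E -> R -> R).
Variables (U : gpoint V E -> gpoint V E -> Prop) (beta : gpoint V E -> gpoint V E -> R).
Variables (cs ct : E -> R).
Hypothesis Hf : forall e, fv (src e) < fv (tgt e).
Hypothesis Hcl : circ_limits src tgt fv rho c cs ct.
Variables (dV : V -> R) (gV : V -> R -> R).
Hypothesis HV : forall v, vertex_chart src tgt fv c U beta v (dV v) (gV v).
Variable zs : E -> seq R.
Hypothesis Hzs : forall e, List.NoDup (zs e) /\
  forall t, List.In t (zs e) <-> exceptional src tgt fv c (PE e t).
Variables (dZ : E -> R -> R) (gZ : E -> R -> R -> R).
Hypothesis HZ : forall e z, exceptional src tgt fv c (PE e z) ->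
  interior_chart src tgt fv c U beta e z (dZ e z) (gZ e z).
Variable r : R.
Hypothesis Hr0 : 0 < r.
Hypothesis Hr : forall e,
  (forall p q, List.In p (fv (src e) :: fv (tgt e) :: zs e) ->
     List.In q (fv (src e) :: fv (tgt e) :: zs e) -> p <> q -> 4 * r <= Rabs (p - q)) /\
  (forall d, List.In d (dV (src e) :: dV (tgt e) :: map (dZ e) (zs e)) -> 2 * r <= d).

Definition centers (e : E) : seq (R * (R -> R)) :=
  (fv (src e), gV (src e)) :: (fv (tgt e), gV (tgt e)) :: map (fun z => (z, gZ e z)) (zs e).

Definition csgn (e : E) (t : R) : R := sgn (c e t).

Lemma centers_fst e : map fst (centers e) = fv (src e) :: fv (tgt e) :: zs e.
Proof. by rewrite /centers /=; do 2 congr (_ :: _); elim: (zs e) => //= z l ->. Qed.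

Lemma zero_center e z : List.In z (zs e) -> List.In (z, gZ e z) (centers e).
Proof. by move=> Hz; right; right; apply (List.in_map (fun z => (z, gZ e z))). Qed.

Lemma centersP e i : List.In i (centers e) ->
  [\/ i = (fv (src e), gV (src e)), i = (fv (tgt e), gV (tgt e))
    | List.In i.1 (zs e) /\ i = (i.1, gZ e i.1)].
Proof.
move=> [<-|[<-|/List.in_map_iff [z [<- Hz]]]]; [exact: Or31 | exact: Or32 | exact: Or33].
Qed.

Lemma edge_setup_centers e :
  edge_setup (fv (src e)) (fv (tgt e)) r (centers e) (csgn e).
Proof.
have Hab := Hf e; have [Hnd Hzc] := Hzs e; have [Hsep Hrad] := Hr e.
have [dVs smVs _ _ sgVs] := HV (src e); have [dVt smVt _ _ sgVt] := HV (tgt e).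
have RVs : 2 * r <= dV (src e) by apply: Hrad; left.
have RVt : 2 * r <= dV (tgt e) by apply: Hrad; right; left.
have RZ z : List.In z (zs e) -> 2 * r <= dZ e z.
  by move=> Hz; apply: Hrad; right; right; apply List.in_map.
have Hfst i : List.In i (centers e) -> List.In i.1 (fv (src e) :: fv (tgt e) :: zs e).
  by move=> Hi; rewrite -centers_fst; apply List.in_map.
split => //.
- by eexists; left.
- by eexists; right; left.
- by move=> i j Hi Hj; apply: Hsep; apply: Hfst.
- rewrite centers_fst; constructor.
    by move=> [|/Hzc [] /=]; lra.
  by constructor => // /Hzc [] /=; lra.
- by move=> i /centersP [->|->|[/Hzc [] /= Hz _ _]] /=; lra.
- move=> i /centersP [->|->|[Hz ->]] y /= Hy.
  + by apply: smooth_on_smooth_near smVs _; lra.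
  + by apply: smooth_on_smooth_near smVt _; lra.
  + have [dz smz _] := HZ (proj1 (Hzc _) Hz).
    by apply: smooth_on_smooth_near smz _; have := RZ _ Hz; lra.
- rewrite /csgn => i /centersP [->|->|[Hz ->]] t Ht /= Hti Htn Hs;
    apply: mul_lt0_of_sgn_opp => //; try (move=> E0; apply: Hs; rewrite E0 sgn_0 //).
  + by have [] := sgVs e t (introT orP (or_introl (eqxx _))) Ht ltac:(lra).
  + by have [] := sgVt e t (introT orP (or_intror (eqxx _))) Ht ltac:(lra).
  + have [dz smz sgz] := HZ (proj1 (Hzc _) Hz).
    by have [_ _ ->] := sgz t Ht ltac:(have := RZ _ Hz; lra).
- move=> t Ht Hnc.
  have Hnx : ~ exceptional src tgt fv c (PE e t).
    by move=> /Hzc /(zero_center (e := e)) /Hnc.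
  have Hc0 : c e t <> 0 by move=> H0; apply: Hnx; split => //; right.
  have Ht0 : t <> 0 by move=> H0; apply: Hnx; split => //; left.
  split => //; first exact: sgn_neq0.
  by apply: sgn_locally_const => //; have [Hc _] := Hcl e; apply: Hc.
Qed.

Definition probe (e : E) : R := fv (tgt e) - 3 * r / 2.

Lemma probe_range e : fv (src e) < probe e < fv (tgt e).
Proof. by have [] := last_regular_point (edge_setup_centers e). Qed.

Lemma probe_no_exceptional e z : probe e <= z < fv (tgt e) ->
  z <> 0 /\ c e z <> 0.
Proof.
move=> Hz; have Hp := probe_range e.
suff : ~ exceptional src tgt fv c (PE e z).
  by move=> Hnx; split=> H0; apply: Hnx; split=> //=; [lra | left | lra | right].
move=> /(proj2 (Hzs e) z) /(zero_center (e := e)) Hin.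
have := center_le_tgt_sub (edge_setup_centers e) Hin; rewrite /probe /= in Hz *.
by move=> H; have := H ltac:(lra); lra.
Qed.

Lemma sgn_probe e : ct e <> 0 -> csgn e (probe e) = sgn (ct e).
Proof.
move=> Hct; have Hp := probe_range e; have [Hcont [_ [Hlim _]]] := Hcl e.
apply: (sgn_of_left_limit (q := fv (tgt e))) Hlim Hct _ => [||x Hx]; first lra.
- by move=> x Hx; apply: Hcont; lra.
- by have [] := probe_no_exceptional Hx.
Qed.

Lemma probe_mul_csgn_neq0 e : probe e * csgn e (probe e) <> 0.
Proof.
have [Ht Hc] := probe_no_exceptional (conj (Rle_refl _) (proj2 (probe_range e))).
by apply: Rmult_integral_contrapositive; split => //; apply: sgn_neq0.
Qed.

Definition core (e : E) : R := core_int (fv (src e)) (fv (tgt e)) r (centers e).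
Definition low_part (e : E) : R :=
  fill_int (fv (src e)) (fv (tgt e)) r (centers e) (csgn e) (-1).
Definition high_part (e : E) : R :=
  fill_int (fv (src e)) (fv (tgt e)) r (centers e) (csgn e) 1.

(* On a lowered (raised) edge, the integral of f beta can only be made smaller
   (larger) than the core. *)
Definition lowered (e : E) : bool := if Rle_dec (low_part e) 0 then true else false.
Definition raised (e : E) : bool := if Rle_dec (high_part e) 0 then true else false.

Lemma lowered_probe e : lowered e -> 0 < probe e * csgn e (probe e).
Proof.
rewrite /lowered; case: Rle_dec => // Hlow _.
have := @probe_mul_csgn_neq0 e; case: (Rlt_dec 0 (probe e * csgn e (probe e))) => // h Hnz.
have : 0 < low_part e by apply: (fill_int_gt0 (edge_setup_centers e)); rewrite -/(probe e); lra.
lra.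
Qed.

Lemma raised_probe e : raised e -> probe e * csgn e (probe e) < 0.
Proof.
rewrite /raised; case: Rle_dec => // Hhigh _.
have := @probe_mul_csgn_neq0 e; case: (Rlt_dec (probe e * csgn e (probe e)) 0) => // h Hnz.
have : 0 < high_part e by apply: (fill_int_gt0 (edge_setup_centers e)); rewrite -/(probe e); lra.
lra.
Qed.

Hypothesis Hdeg : forall v, (deg src tgt v == 1)%N
  || ((indeg tgt v == 2)%N && (outdeg src v == 1)%N)
  || ((indeg tgt v == 1)%N && (outdeg src v == 2)%N).
Hypothesis Hbal : balanced_at src tgt cs ct.

(* Two distinct edges entering w make w 3-valent, so their limits of c at w have
   the same sign; as their probes coincide, f sgn c has the same sign there. *)
Lemma no_lowered_raised_merge e1 e2 : tgt e1 = tgt e2 -> lowered e1 -> raised e2 -> False.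
Proof.
move=> Et /lowered_probe L1 /raised_probe R2.
have Tp : probe e1 = probe e2 by rewrite /probe Et.
have [E12|Hne] := eqVneq e1 e2; first by subst e2; lra.
set w := tgt e1.
have Hin : (1 < indeg tgt w)%N.
  by apply/card_gt1P; exists e1, e2; rewrite !inE -Et eqxx.
have Hd3 : (deg src tgt w == 3)%N.
{ case/orP: (Hdeg w) => [/orP [/eqP H|/andP [/eqP H1 /eqP H2]]|/andP [/eqP H1 _]].
  - by have := leq_trans Hin (leq_addr (outdeg src w) _); rewrite -/(deg src tgt w) H.
  - by rewrite /deg H1 H2.
  - by rewrite H1 in Hin. }
have Hlim e : tgt e = w -> limit_at src cs ct w e = ct e.
{ move=> Ee; rewrite /limit_at; case: eqP => // Es.
  by have := Hf e; rewrite Es Ee; lra. }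
have I1 : incident src tgt w e1 by rewrite /incident eqxx orbT.
have I2 : incident src tgt w e2 by rewrite /incident -Et eqxx orbT.
have Hsigns : (0 < ct e1 /\ 0 < ct e2) \/ (ct e1 < 0 /\ ct e2 < 0).
  by case: (Hbal Hd3) => H; [left | right]; rewrite -!Hlim //; split; apply: H.
have Hsame : csgn e1 (probe e1) = csgn e2 (probe e2).
  by rewrite !sgn_probe; case: Hsigns => -[h1 h2];
    rewrite ?(sgn_pos h1) ?(sgn_pos h2) ?(sgn_neg h1) ?(sgn_neg h2); lra.
by rewrite Hsame Tp in L1; lra.
Qed.

Variable L : R.
Hypothesis HL : forall e, Rabs (core e) < L.

Definition forced : rel V := forced_rel src tgt lowered raised.

Definition potential (v : V) : R := - L * INR (height forced v).

Lemma potential_step u v : forced u v -> potential v - potential u <= - L.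
Proof.
move=> Huv; have [e _] := existsP Huv.
have HL0 : 0 < L by have := Rabs_pos (core e); have := HL e; lra.
have /ltP H := height_lt Huv (forced_rel_acyclic Hf no_lowered_raised_merge Huv).
by have := le_INR _ _ H; rewrite S_INR /potential; nra.
Qed.

Definition potential_diff (e : E) : R := potential (tgt e) - potential (src e).

Lemma lowered_potential_diff e : lowered e -> potential_diff e < core e.
Proof.
move=> He; have : forced (src e) (tgt e) by apply/existsP; exists e; rewrite !eqxx He.
by move/potential_step; have /Rabs_lt_between := HL e; rewrite /potential_diff; lra.
Qed.

Lemma raised_potential_diff e : raised e -> core e < potential_diff e.
Proof.
move=> He; have : forced (tgt e) (src e) by apply/existsP; exists e; rewrite !eqxx He orbT.
by move/potential_step; have /Rabs_lt_between := HL e; rewrite /potential_diff; lra.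
Qed.

Lemma fill_constants_choice : exists Km Kp : E -> R, forall e,
  [/\ 0 < Km e, 0 < Kp e & core e + Km e * low_part e - Kp e * high_part e = potential_diff e].
Proof.
suff He e : exists K : R * R,
    [/\ 0 < K.1, 0 < K.2 & core e + K.1 * low_part e - K.2 * high_part e = potential_diff e].
  by have [K HK] := choice _ He; exists (fun e => (K e).1), (fun e => (K e).2).
have HS := edge_setup_centers e.
have [Km [Kp HK]] : exists Km Kp, [/\ 0 < Km, 0 < Kp &
    core e + Km * low_part e - Kp * high_part e = potential_diff e].
{ apply: fill_constants_exist; [exact: fill_int_ge0 HS (-1) | exact: fill_int_ge0 HS 1 | |].
  - move=> H0; apply: lowered_potential_diff.
    by rewrite /lowered; case: Rle_dec => // h; exfalso; apply: h; lra.
  - move=> H0; apply: raised_potential_diff.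
    by rewrite /raised; case: Rle_dec => // h; exfalso; apply: h; lra. }
by exists (Km, Kp).
Qed.

Variables Km Kp : E -> R.
Hypothesis HK : forall e,
  [/\ 0 < Km e, 0 < Kp e & core e + Km e * low_part e - Kp e * high_part e = potential_diff e].

Definition glued_form (x : gpoint V E) : R :=
  match x with
  | PV v => gV v (fv v)
  | PE e t => edge_profile r (centers e) (fill (Km e) (Kp e) (csgn e)) t
  end.

Lemma glued_form_near_vertex v e t : incident src tgt v e ->
  Rabs (t - fv v) < r / 2 -> glued_form (PE e t) = gV v t.
Proof.
move=> /orP [/eqP <-|/eqP <-] Ht /=.
- by apply: (edge_profile_center (edge_setup_centers e) _ _ (i := (fv (src e), gV (src e)))) => //; left.
- by apply: (edge_profile_center (edge_setup_centers e) _ _ (i := (fv (tgt e), gV (tgt e)))) => //; right; left.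
Qed.

Lemma glued_form_near_zero e z t : List.In z (zs e) ->
  Rabs (t - z) < r / 2 -> glued_form (PE e t) = gZ e z t.
Proof.
move=> Hz Ht /=; apply: (edge_profile_center (edge_setup_centers e) _ _ (i := (z, gZ e z))) => //.
exact: zero_center.
Qed.

Lemma glued_form_oneform : oneform_on src tgt fv (fun _ => True) glued_form.
Proof.
move=> [v|e t] /= Hx _.
- have [dv smv _ _ _] := HV v.
  exists (Rmin (r / 2) (dV v)), (gV v).
  have m1 := Rmin_l (r / 2) (dV v); have m2 := Rmin_r (r / 2) (dV v).
  split; first by apply: Rmin_pos; lra.
  split; first by move=> n y /= Hy; apply: smv; lra.
  move=> [w|e t] Hy /= Hin _; first by rewrite Hin.
  by case: Hin => Hinc Hd; apply: glued_form_near_vertex => //; lra.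
- exists (Rmin (t - fv (src e)) (fv (tgt e) - t)), (fun s => glued_form (PE e s)).
  have m1 := Rmin_l (t - fv (src e)) (fv (tgt e) - t).
  have m2 := Rmin_r (t - fv (src e)) (fv (tgt e) - t).
  split; first by apply: Rmin_pos; lra.
  split; last by move=> [w|e' s] Hy //= [<-].
  move=> n y /= /Rabs_lt_between Hy; apply: smooth_near_at.
  by apply: (edge_profile_smooth (edge_setup_centers e)); lra.
Qed.

Lemma glued_form_neq0 x : onG src tgt fv x -> ~ exceptional src tgt fv c x -> glued_form x <> 0.
Proof.
case: x => [v|e t] Hx Hne; first by case: Hne.
have Hnc i : List.In i (centers e) -> i.1 <> t.
{ move=> /centersP [->|->|[Hz Ei]] /= Ei'; rewrite ?Ei' /= in Hx; try lra.
  by apply: Hne; rewrite -Ei'; apply/(proj2 (Hzs e)). }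
have [Km0 Kp0 _] := HK e.
have := edge_profile_sign (edge_setup_centers e) Km0 Kp0 Hx Hnc.
by rewrite /= => H E0; rewrite E0 in H; lra.
Qed.

Lemma glued_form_local xi : exceptional src tgt fv c xi ->
  exists W, nbhd src tgt fv W xi /\
    forall y, onG src tgt fv y -> W y -> U xi y /\ glued_form y = beta xi y.
Proof.
case: xi => [v|e z] Hxi.
- have [dv _ Hself Hat Hnear] := HV v.
  have Hd : 0 < Rmin (r / 2) (dV v) by apply: Rmin_pos; lra.
  exists (inball src tgt fv (PV v) (Rmin (r / 2) (dV v))); split; first by exists (Rmin (r / 2) (dV v)).
  have m1 := Rmin_l (r / 2) (dV v); have m2 := Rmin_r (r / 2) (dV v).
  move=> [w|e t] Hy /= Hin; first by rewrite -Hin.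
  case: Hin => Hinc Hdist; have [HU Hb _] := Hnear e t Hinc Hy ltac:(lra).
  by rewrite Hb; split => //; apply: glued_form_near_vertex => //; lra.
- have [dz _ Hnear] := HZ Hxi.
  have Hz : List.In z (zs e) by apply/(proj2 (Hzs e)).
  have Hd : 0 < Rmin (r / 2) (dZ e z) by apply: Rmin_pos; lra.
  exists (inball src tgt fv (PE e z) (Rmin (r / 2) (dZ e z))); split; first by exists (Rmin (r / 2) (dZ e z)).
  have m1 := Rmin_l (r / 2) (dZ e z); have m2 := Rmin_r (r / 2) (dZ e z).
  move=> [w|e' t] Hy //= [Ee Hdist]; subst e'; have [HU Hb _] := Hnear t Hy ltac:(lra).
  by rewrite Hb; split => //; apply: glued_form_near_zero => //; lra.
Qed.

Lemma edge_int_glued_form e : edge_int src tgt fv glued_form e = potential_diff e.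
Proof.
have [_ _ <-] := HK e; have Hab := Hf e.
rewrite /edge_int -(edge_profile_RInt (edge_setup_centers e)).
apply: RInt_ext => t; rewrite Rmin_left ?Rmax_right; try lra.
by move=> Ht; rewrite /bedge; do 2 (case: Rle_dec => ?; first lra).
Qed.

Lemma glued_form_exact : exact_f_form src tgt fv glued_form.
Proof. exact: (exact_of_potential (F := potential)) edge_int_glued_form. Qed.

End Construction.

Theorem proposition4p19 (V E : finType) (src tgt : E -> V) (fv : V -> R)
  (bnd : pred V) (M rho c : E -> R -> R)
  (U : gpoint V E -> gpoint V E -> Prop) (beta : gpoint V E -> gpoint V E -> R) :
  is_reeb_graph src tgt fv bnd ->
  log_smooth src tgt fv M rho ->
  balanced_circulation src tgt fv rho bnd c ->
  (forall xi, exceptional src tgt fv c xi ->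
     openG src tgt fv (U xi) /\ U xi xi /\
     oneform_on src tgt fv (U xi) (beta xi) /\
     (forall y, onG src tgt fv y -> U xi y -> y <> xi -> ~ is_vertex y ->
        sgn (beta xi y) = - sgn (cval c y))) ->
  exists b : gpoint V E -> R,
    oneform_on src tgt fv (fun _ => True) b /\
    (forall x, onG src tgt fv x -> ~ exceptional src tgt fv c x -> b x <> 0) /\
    (forall xi, exceptional src tgt fv c xi ->
       exists W, nbhd src tgt fv W xi /\
         forall y, onG src tgt fv y -> W y -> U xi y /\ b y = beta xi y) /\
    exact_f_form src tgt fv b.
Proof.
move=> [Hf [_ [Hdeg _]]] [_ [Hrho _]] [cs [ct [Hcl [_ Hbal]]]] Hloc.
have [[dV [gV HV]] [dZ [gZ HZ]]] := charts_choice Hloc.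
have [zs Hzs] := choice _ (fun e => exceptional_points_list e Hrho Hcl).
have Hds e d : List.In d (dV (src e) :: dV (tgt e) :: map (dZ e) (zs e)) -> 0 < d.
{ move=> [<-|[<-|/List.in_map_iff [z [<- Hz]]]]; try exact: vchart_pos (HV _).
  exact: ichart_pos (HZ e z (proj1 (proj2 (Hzs e) z) Hz)). }
have [r Hr0 Hr] := radius_exists (fun e => fv (src e) :: fv (tgt e) :: zs e) Hds.
have [L _ HL] := finite_Rabs_bound (core src tgt fv gV zs gZ r).
have [Km [Kp HK]] := fill_constants_choice Hf Hcl HV Hzs HZ Hr0 Hr Hdeg Hbal HL.
exists (glued_form src tgt fv c gV zs gZ r Km Kp); split; [|split; [|split]].
- exact (glued_form_oneform Hf Hcl HV Hzs HZ Hr0 Hr Km Kp).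
- exact (glued_form_neq0 Hf Hcl HV Hzs HZ Hr0 Hr HK).
- exact (glued_form_local Hf Hcl HV Hzs HZ Hr0 Hr Km Kp).
- exact (glued_form_exact Hf Hcl HV Hzs HZ Hr0 Hr HK).
Qed.
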